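(* With the notation of the context, for all fixed frequencies, $$|S_k|\lesssim\min\big((N_2\wedge N_3)^{2-\alpha}\log(2+N_1)+N_1,\ (N_1\wedge N_2)^{2-\alpha}\log(2+N_3)+N_3\big),$$ $$|S_{k_1}|\lesssim\min\big(N_3^{2-\alpha}\log(2+N_2)+N_2,\ N_2^{2-\alpha}\log(2+N_3)+N_3\big),$$ $$|S_{k_2}|\lesssim\min\big(N_3^{2-\alpha}\log(2+N_1)+N_1,\ N_1^{2-\alpha}\log(2+N_3)+N_3\big),$$ $$|S_{k_3}|\lesssim\min\big(N_1^{2-\alpha}\log(2+N_2)+N_2,\ N_2^{2-\alpha}\log(2+N_1)+N_1\big).$$
   Context: Fix $\alpha\in(1,2)$, dyadic numbers $1\le N_1,N_2,N_3\le N$, a real number $m$ and a constant $C_0>0$. Let $S$ be the set of $(k,k_1,k_2,k_3)\in\mathbb Z^4$ with $k=k_1-k_2+k_3$, $k_2\notin\{k_1,k_3\}$, $\big||k_1|^\alpha-|k_2|^\alpha+|k_3|^\alpha-|k|^\alpha-m\big|\le C_0$, $|k|\le N$ and $|k_j|\le N_j$ for $j=1,2,3$. When some of the variables are fixed, $S$ with those variables as subscripts denotes the set of the remaining variables for which the quadruple lies in $S$ (e.g. $S_{k_1}=\{(k,k_2,k_3):(k,k_1,k_2,k_3)\in S\}$). $|A|$ is the cardinality of $A$, $a\wedge b=\min(a,b)$. $A\lesssim B$ means $A\le CB$ with $C$ depending only on $\alpha$ and $C_0$. *)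

From Stdlib Require Import Reals ZArith List Lia Lra.
Import ListNotations.
Open Scope R_scope.

(* x^a for x >= 0, with the convention 0^a = 0 (a > 0). *)
Definition rpow (x a : R) : R :=
  if Req_EM_T x 0 then 0 else Rpower x a.

Definition absp (k : Z) (alpha : R) : R := rpow (IZR (Z.abs k)) alpha.

Definition dyad (n : nat) : Z := (2 ^ Z.of_nat n)%Z.

Definition inS (alpha C0 m : R) (N N1 N2 N3 : Z) (k k1 k2 k3 : Z) : bool :=
  Z.eqb k (k1 - k2 + k3)%Z && negb (Z.eqb k2 k1) && negb (Z.eqb k2 k3) &&
  (if Rle_dec (Rabs (absp k1 alpha - absp k2 alpha + absp k3 alpha
                     - absp k alpha - m)) C0 then true else false) &&
  Z.leb (Z.abs k) N && Z.leb (Z.abs k1) N1 && Z.leb (Z.abs k2) N2 &&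
  Z.leb (Z.abs k3) N3.

Definition zrange (a : Z) : list Z :=
  map (fun i => (Z.of_nat i - a)%Z) (seq 0 (Z.to_nat (2 * a + 1))).

Definition box3 (a b c : Z) : list (Z * Z * Z) :=
  list_prod (list_prod (zrange a) (zrange b)) (zrange c).

(* Cardinalities of the fibres; every element of S satisfies |k|<=N, |k_j|<=N_j,
   so enumerating the box and filtering counts each fibre element exactly once. *)
Definition card_Sk alpha C0 m N N1 N2 N3 k : nat :=
  length (filter (fun '(k1, k2, k3) => inS alpha C0 m N N1 N2 N3 k k1 k2 k3)
                 (box3 N1 N2 N3)).
Definition card_Sk1 alpha C0 m N N1 N2 N3 k1 : nat :=
  length (filter (fun '(k, k2, k3) => inS alpha C0 m N N1 N2 N3 k k1 k2 k3)
                 (box3 N N2 N3)).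
Definition card_Sk2 alpha C0 m N N1 N2 N3 k2 : nat :=
  length (filter (fun '(k, k1, k3) => inS alpha C0 m N N1 N2 N3 k k1 k2 k3)
                 (box3 N N1 N3)).
Definition card_Sk3 alpha C0 m N N1 N2 N3 k3 : nat :=
  length (filter (fun '(k, k1, k2) => inS alpha C0 m N N1 N2 N3 k k1 k2 k3)
                 (box3 N N1 N2)).

Definition bnd (alpha : R) (A B : Z) : R :=
  Rpower (IZR A) (2 - alpha) * ln (2 + IZR B) + IZR B.

From Stdlib Require Import Reals ZArith Lra Lia List.
Import ListNotations.
Open Scope R_scope.

(* The engine is the uniform convexity of phi on the integers: its second
   difference at n is at least c_a (|n| + 2)^(a-2).  Hence, for a fixed shift
   b <> 0, the gap x |-> phi x - phi (x + b) is strictly monotone, with steps of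
   size >= c_a |b| (K + 2)^(a-2) on [-K, K]; so the x of a window of radius L
   whose gap lies in a band of width 2 C0 number at most
   1 + C (L + |b|)^(2-a) / |b| (a "line count").  Summing line counts over N
   consecutive shifts costs C (L^(2-a) log(2 + N) + N) by the harmonic sum.

   Fixing one frequency and eliminating a second one through k = k1 - k2 + k3,
   each fibre of S becomes a family of lines; this proves six of the eight
   bounds.  The remaining two (|S_k1| <~ N2^(2-a) log(2+N3) + N3 and its mirror
   for S_k3) follow from the symmetric bound when the other range is larger,
   since A^(2-a) log(2+B) <~ B for A <= B; otherwise we use a row argument: on
   the row of fixed k3, x |-> phi x + phi (c - x) has nondecreasing increments,
   resonant points where the increments are steep are O(1) per row, and flat
   points lie near the diagonal 2 x ~ c, where they are again counted by lines. *)

Lemma exp_le_mono (x y : R) : x <= y -> exp x <= exp y.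
Proof. intros [H|H]; [left; apply exp_increasing; auto|subst; lra]. Qed.

Lemma ln_le_mono (x y : R) : 0 < x -> x <= y -> ln x <= ln y.
Proof. intros Hx [H|H]; [left; apply ln_increasing; auto|subst; lra]. Qed.

Lemma Rpower_pos (x e : R) : 0 < Rpower x e.
Proof. unfold Rpower. apply exp_pos. Qed.

Lemma Rpower_antimono_base (x y e : R) : 0 < x <= y -> e <= 0 -> Rpower y e <= Rpower x e.
Proof.
  intros [Hx Hxy] He. unfold Rpower. apply exp_le_mono.
  destruct (Req_dec x y) as [->|Hne]; [lra|].
  assert (ln x < ln y) by (apply ln_increasing; lra).
  nra.
Qed.

Lemma Rpower_le1 (z e : R) : 1 <= z -> e <= 0 -> Rpower z e <= 1.
Proof. intros Hz He. rewrite <- (Rpower_O z) by lra. apply Rle_Rpower; lra. Qed.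

Lemma Rpower_le_self (z e : R) : 1 <= z -> e <= 1 -> Rpower z e <= z.
Proof. intros Hz He. rewrite <- (Rpower_1 z) at 2 by lra. apply Rle_Rpower; lra. Qed.

Lemma Rpower_ge_inv (z e : R) : 1 <= z -> -1 <= e -> / z <= Rpower z e.
Proof.
  intros Hz He. replace (/ z) with (Rpower z (- (1))).
  - apply Rle_Rpower; lra.
  - rewrite Rpower_Ropp, Rpower_1; lra.
Qed.

Lemma Rpower_inv_mul (z e : R) : Rpower z e * Rpower z (- e) = 1.
Proof.
  rewrite <- Rpower_plus. replace (e + - e) with 0 by ring.
  unfold Rpower. rewrite Rmult_0_l. apply exp_0.
Qed.

Lemma Rpower_one_base (e : R) : Rpower 1 e = 1.
Proof. unfold Rpower. rewrite ln_1, Rmult_0_r. apply exp_0. Qed.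

Lemma ln_le_Rpower (x g : R) : 1 <= x -> 0 < g -> g * ln x <= Rpower x g.
Proof. intros Hx Hg. unfold Rpower. pose proof (exp_ineq1_le (g * ln x)). lra. Qed.

Lemma Rpower_sum_le (x y e : R) : 1 <= x -> 1 <= y -> 0 <= e <= 1 ->
  Rpower (x + y) e <= 2 * (Rpower x e + Rpower y e).
Proof.
  intros Hx Hy He. set (M := Rmax x y).
  assert (HM : x + y <= 2 * M) by (unfold M; pose proof (Rmax_l x y); pose proof (Rmax_r x y); lra).
  apply Rle_trans with (Rpower (2 * M) e); [apply Rle_Rpower_l; lra|].
  rewrite <- Rpower_mult_distr by (unfold M; pose proof (Rmax_l x y); lra).
  assert (Rpower 2 e <= 2) by (apply Rpower_le_self; lra).
  assert (Rpower M e <= Rpower x e + Rpower y e).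
  { unfold M. pose proof (Rpower_pos x e). pose proof (Rpower_pos y e).
    destruct (Rle_dec x y); [rewrite Rmax_right by lra|rewrite Rmax_left by lra]; lra. }
  pose proof (Rpower_pos M e). pose proof (Rpower_pos 2 e). nra.
Qed.

Lemma ln3_ge1 : 1 <= ln 3.
Proof.
  replace 1 with (ln (exp 1)) at 1 by apply ln_exp.
  apply ln_le_mono; [apply exp_pos|apply exp_le_3].
Qed.

Lemma ln_2plus_ge1 (N : Z) : (1 <= N)%Z -> 1 <= ln (2 + IZR N).
Proof.
  intros HN. assert (1 <= IZR N) by (apply IZR_le; lia).
  pose proof ln3_ge1. assert (ln 3 <= ln (2 + IZR N)) by (apply ln_le_mono; lra). lra.
Qed.

Lemma Rabs_le_inv (x b : R) : Rabs x <= b -> - b <= x <= b.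
Proof. unfold Rabs. destruct (Rcase_abs x); lra. Qed.

(* Second differences of t |-> t^a on the reals: by the mean value theorem,
   applied twice, they are at least a (a - 1) (t + 2)^(a-2). *)
Lemma Rpower_second_diff (a t : R) : 1 < a < 2 -> 0 < t ->
  a * (a - 1) * Rpower (t + 2) (a - 2) <=
  Rpower (t + 2) a - 2 * Rpower (t + 1) a + Rpower t a.
Proof.
  intros Ha Ht.
  set (f := fun s => Rpower (s + 1) a - Rpower s a).
  set (f' := fun s => a * Rpower (s + 1) (a - 1) - a * Rpower s (a - 1)).
  assert (Hd : forall c, t <= c <= t + 1 -> derivable_pt_lim f c (f' c)).
  { intros c Hc. unfold f, f'. apply derivable_pt_lim_minus.
    - replace (a * Rpower (c + 1) (a - 1)) with ((a * Rpower (c + 1) (a - 1)) * 1) by ring.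
      apply (derivable_pt_lim_comp (fun s => s + 1) (fun x => Rpower x a)).
      + intros eps Heps. exists (mkposreal eps Heps). intros hh Hh _.
        replace ((c + hh + 1 - (c + 1)) / hh - 1) with 0 by (field; auto).
        rewrite Rabs_R0. auto.
      + apply derivable_pt_lim_power. lra.
    - apply derivable_pt_lim_power. lra. }
  destruct (MVT_cor2 f f' t (t + 1) ltac:(lra) Hd) as [xi [Hxi Hxir]].
  set (h := fun s => Rpower s (a - 1)).
  assert (Hd2 : forall c, xi <= c <= xi + 1 ->
     derivable_pt_lim h c ((a - 1) * Rpower c (a - 1 - 1))).
  { intros c Hc. unfold h. apply derivable_pt_lim_power. lra. }
  destruct (MVT_cor2 h _ xi (xi + 1) ltac:(lra) Hd2) as [ze [Hze Hzer]].
  unfold f, f', h in *.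
  replace (t + 1 + 1) with (t + 2) in Hxi by ring.
  replace (a - 1 - 1) with (a - 2) in Hze by ring.
  replace (xi + 1 - xi) with 1 in Hze by ring.
  assert (Rpower (t + 2) (a - 2) <= Rpower ze (a - 2)) by (apply Rpower_antimono_base; lra).
  assert (a * (a - 1) * Rpower (t + 2) (a - 2) <= a * (a - 1) * Rpower ze (a - 2))
    by (apply Rmult_le_compat_l; nra).
  nra.
Qed.

(** * Convexity of phi(n) = |n|^a on the integers *)

Definition phi (a : R) (n : Z) : R := absp n a.

Definition dphi (a : R) (n : Z) : R := phi a (n + 1) - phi a n.
Definition d2phi (a : R) (n : Z) : R := phi a (n + 2) - 2 * phi a (n + 1) + phi a n.

Definition cvx (a : R) : R := Rmin (a * (a - 1)) (Rpower 2 a - 2).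

Lemma phi_congr (a : R) (u v : Z) : u = v -> phi a u = phi a v.
Proof. intros ->. reflexivity. Qed.

Lemma phi_abs (a : R) (n : Z) : phi a n = phi a (Z.abs n).
Proof. unfold phi, absp. rewrite Z.abs_idemp. reflexivity. Qed.

Lemma phi_opp (a : R) (n : Z) : phi a (- n) = phi a n.
Proof. rewrite (phi_abs a (-n)), Z.abs_opp, <- phi_abs. reflexivity. Qed.

Lemma phi_zero (a : R) : phi a 0 = 0.
Proof. unfold phi, absp, rpow. simpl. destruct (Req_EM_T 0 0); [auto|lra]. Qed.

Lemma phi_pos (a : R) (n : Z) : (0 < n)%Z -> phi a n = Rpower (IZR n) a.
Proof.
  intros Hn. unfold phi, absp, rpow. rewrite Z.abs_eq by lia.
  destruct (Req_EM_T (IZR n) 0) as [e|]; [|auto].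
  apply eq_IZR in e. lia.
Qed.

Lemma phi_one (a : R) : phi a 1 = 1.
Proof. rewrite phi_pos by lia. apply Rpower_one_base. Qed.

Lemma two_pow_bounds (a : R) : 1 < a < 2 -> 2 < Rpower 2 a < 4.
Proof.
  intros Ha. split.
  - rewrite <- (Rpower_1 2) at 1 by lra. apply Rpower_lt; lra.
  - replace 4 with (Rpower 2 (INR 2)).
    + apply Rpower_lt; [lra|]. simpl. lra.
    + rewrite Rpower_pow by lra. simpl. ring.
Qed.

Lemma cvx_pos (a : R) : 1 < a < 2 -> 0 < cvx a.
Proof. intros Ha. unfold cvx. pose proof (two_pow_bounds a Ha). apply Rmin_glb_lt; nra. Qed.

Lemma dphi_diff (a : R) (n : Z) : dphi a (n + 1) - dphi a n = d2phi a n.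
Proof. unfold dphi, d2phi. replace (n + 1 + 1)%Z with (n + 2)%Z by lia. ring. Qed.

(* phi is even, so its second difference is symmetric about -1. *)
Lemma d2phi_reflect (a : R) (n : Z) : d2phi a (- n - 2) = d2phi a n.
Proof.
  unfold d2phi.
  rewrite (phi_congr a (- n - 2 + 2) (- n)), (phi_congr a (- n - 2 + 1) (- (n + 1))),
    (phi_congr a (- n - 2) (- (n + 2))) by lia.
  rewrite !phi_opp. ring.
Qed.

Lemma d2phi_positive (a : R) (m : Z) : 1 < a < 2 -> (1 <= m)%Z ->
  a * (a - 1) * Rpower (IZR m + 2) (a - 2) <= d2phi a m.
Proof.
  intros Ha Hm. unfold d2phi. rewrite !phi_pos by lia. rewrite !plus_IZR.
  apply Rpower_second_diff; auto. apply IZR_le in Hm. lra.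
Qed.

(* Away from the three points n = 0, -1, -2 this is the real bound (after
   reflecting n <= -3 to -n-2 >= 1); at those points it is an explicit value. *)
Lemma d2phi_lower (a : R) (n : Z) : 1 < a < 2 ->
  cvx a * Rpower (IZR (Z.abs n) + 2) (a - 2) <= d2phi a n.
Proof.
  intros Ha. pose proof (cvx_pos a Ha). pose proof (two_pow_bounds a Ha).
  assert (Hc1 : cvx a <= a * (a - 1)) by apply Rmin_l.
  assert (Hc2 : cvx a <= Rpower 2 a - 2) by apply Rmin_r.
  assert (HA : 0 <= IZR (Z.abs n)) by (apply IZR_le; lia).
  assert (Hp := Rpower_pos (IZR (Z.abs n) + 2) (a - 2)).
  assert (Hsplit : (-2 <= n <= 0)%Z \/ (1 <= n)%Z \/ (n <= -3)%Z) by lia.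
  destruct Hsplit as [Hn|[Hn|Hn]].
  - assert (Hsmall : Rpower 2 a - 2 <= d2phi a n).
    { unfold d2phi. rewrite (phi_abs a (n + 2)), (phi_abs a (n + 1)), (phi_abs a n).
      assert (Hcases : n = 0%Z \/ n = (-1)%Z \/ n = (-2)%Z) by lia.
      destruct Hcases as [-> | [-> | ->]]; simpl Z.abs;
        rewrite ?phi_zero, ?phi_one, ?phi_pos by lia; lra. }
    pose proof (Rpower_le1 (IZR (Z.abs n) + 2) (a - 2) ltac:(lra) ltac:(lra)). nra.
  - pose proof (d2phi_positive a n Ha ltac:(lia)).
    rewrite Z.abs_eq by lia.
    apply Rle_trans with (a * (a - 1) * Rpower (IZR n + 2) (a - 2)); [|auto].
    apply Rmult_le_compat_r; [left; apply Rpower_pos|auto].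
  - set (m := (- n - 2)%Z). rewrite <- d2phi_reflect.
    pose proof (d2phi_positive a m Ha ltac:(unfold m; lia)).
    assert (Rpower (IZR (Z.abs n) + 2) (a - 2) <= Rpower (IZR m + 2) (a - 2)).
    { apply Rpower_antimono_base; [|lra]. assert (IZR m <= IZR (Z.abs n)) by (apply IZR_le; unfold m; lia).
      assert (0 <= IZR m) by (apply IZR_le; unfold m; lia). lra. }
    assert (Hm : d2phi a (- n - 2) = d2phi a m) by reflexivity.
    assert (0 <= a * (a - 1)) by nra.
    apply Rle_trans with (a * (a - 1) * Rpower (IZR (Z.abs n) + 2) (a - 2)).
    + apply Rmult_le_compat_r; lra.
    + apply Rle_trans with (a * (a - 1) * Rpower (IZR m + 2) (a - 2)); [apply Rmult_le_compat_l|]; lra.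
Qed.

(** * Separation of gaps *)

Definition curv (a : R) (K : Z) : R := Rpower (IZR K + 2) (a - 2).

Lemma curv_pos (a : R) (K : Z) : 0 < curv a K.
Proof. apply Rpower_pos. Qed.

Lemma dphi_step (a : R) (K t : Z) : 1 < a < 2 -> (Z.abs t <= K)%Z ->
  cvx a * curv a K <= dphi a (t + 1) - dphi a t.
Proof.
  intros Ha Ht. rewrite dphi_diff. eapply Rle_trans; [|apply d2phi_lower; auto].
  apply Rmult_le_compat_l; [left; apply cvx_pos; auto|].
  unfold curv. apply Rpower_antimono_base; [|lra]. split.
  - assert (0 <= IZR (Z.abs t)) by (apply IZR_le; lia). lra.
  - apply Rplus_le_compat_r. apply IZR_le. auto.
Qed.

Lemma dphi_mono (a : R) (u v : Z) : 1 < a < 2 -> (v <= u)%Z -> dphi a v <= dphi a u.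
Proof.
  intros Ha Hvu. replace u with (v + Z.of_nat (Z.to_nat (u - v)))%Z by lia.
  induction (Z.to_nat (u - v)) as [|n IH].
  - replace (v + Z.of_nat 0)%Z with v by lia. lra.
  - replace (v + Z.of_nat (S n))%Z with ((v + Z.of_nat n) + 1)%Z by lia.
    pose proof (dphi_step a (Z.abs (v + Z.of_nat n)) (v + Z.of_nat n) Ha ltac:(lia)).
    pose proof (cvx_pos a Ha). pose proof (curv_pos a (Z.abs (v + Z.of_nat n))). nra.
Qed.

Lemma dphi_run (a : R) (K v : Z) (n : nat) : 1 < a < 2 ->
  (forall t, (v <= t < v + Z.of_nat n)%Z -> (Z.abs t <= K)%Z) ->
  INR n * (cvx a * curv a K) <= dphi a (v + Z.of_nat n) - dphi a v.
Proof.
  intros Ha. induction n as [|n IH]; intros Hr.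
  - replace (v + Z.of_nat 0)%Z with v by lia. simpl INR. lra.
  - rewrite S_INR. replace (v + Z.of_nat (S n))%Z with ((v + Z.of_nat n) + 1)%Z by lia.
    pose proof (dphi_step a K (v + Z.of_nat n) Ha (Hr (v + Z.of_nat n)%Z ltac:(lia))).
    assert (IH' := IH (fun t Ht => Hr t ltac:(lia))). lra.
Qed.

Lemma phi_mixed_diff (a : R) (K x : Z) (d n : nat) : 1 < a < 2 ->
  (forall t, (x <= t < x + Z.of_nat d + Z.of_nat n)%Z -> (Z.abs t <= K)%Z) ->
  INR n * INR d * (cvx a * curv a K) <=
  (phi a (x + Z.of_nat d + Z.of_nat n) - phi a (x + Z.of_nat d))
  - (phi a (x + Z.of_nat n) - phi a x).
Proof.
  intros Ha. induction n as [|n IH]; intros Hr.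
  - replace (x + Z.of_nat d + Z.of_nat 0)%Z with (x + Z.of_nat d)%Z by lia.
    replace (x + Z.of_nat 0)%Z with x by lia. simpl INR. lra.
  - rewrite S_INR.
    assert (IH' := IH (fun t Ht => Hr t ltac:(lia))).
    pose proof (dphi_run a K (x + Z.of_nat n) d Ha (fun t Ht => Hr t ltac:(lia))) as Hg.
    unfold dphi in Hg.
    rewrite (phi_congr a (x + Z.of_nat n + Z.of_nat d + 1) (x + Z.of_nat d + Z.of_nat (S n))),
      (phi_congr a (x + Z.of_nat n + Z.of_nat d) (x + Z.of_nat d + Z.of_nat n)),
      (phi_congr a (x + Z.of_nat n + 1) (x + Z.of_nat (S n))) in Hg by lia.
    lra.
Qed.

Definition gap (a : R) (b x : Z) : R := phi a x - phi a (x + b).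

Lemma gap_sep_ordered (a : R) (K b x y : Z) : 1 < a < 2 -> b <> 0%Z ->
  (Z.abs x <= K)%Z -> (Z.abs y <= K)%Z -> (Z.abs (x + b) <= K)%Z -> (Z.abs (y + b) <= K)%Z ->
  (x <= y)%Z ->
  IZR (Z.abs (y - x)) * IZR (Z.abs b) * (cvx a * curv a K) <= Rabs (gap a b y - gap a b x).
Proof.
  intros Ha Hb Hx Hy Hxb Hyb Hxy.
  assert (Hpos : 0 <= cvx a * curv a K)
    by (left; apply Rmult_lt_0_compat; [apply cvx_pos; auto|apply curv_pos]).
  set (d := Z.to_nat (y - x)).
  assert (Hd : y = (x + Z.of_nat d)%Z) by (unfold d; lia).
  assert (HdR : IZR (Z.abs (y - x)) = INR d) by (rewrite INR_IZR_INZ; f_equal; unfold d; lia).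
  rewrite HdR. unfold gap.
  set (n := Z.to_nat (Z.abs b)).
  assert (HnR : IZR (Z.abs b) = INR n) by (rewrite INR_IZR_INZ; f_equal; unfold n; lia).
  rewrite HnR.
  assert (0 <= INR n * INR d * (cvx a * curv a K)).
  { apply Rmult_le_pos; auto. apply Rmult_le_pos; apply pos_INR. }
  destruct (Z_lt_le_dec 0 b) as [hb|hb].
  - pose proof (phi_mixed_diff a K x d n Ha (fun t Ht => ltac:(unfold n in *; lia))) as M.
    rewrite (phi_congr a (x + Z.of_nat d + Z.of_nat n) (y + b)),
      (phi_congr a (x + Z.of_nat d) y), (phi_congr a (x + Z.of_nat n) (x + b)) in M
      by (unfold n in *; lia).
    rewrite Rabs_left1; lra.
  - pose proof (phi_mixed_diff a K (x + b) d n Ha (fun t Ht => ltac:(unfold n in *; lia))) as M.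
    rewrite (phi_congr a (x + b + Z.of_nat d + Z.of_nat n) y),
      (phi_congr a (x + b + Z.of_nat d) (y + b)), (phi_congr a (x + b + Z.of_nat n) x) in M
      by (unfold n in *; lia).
    rewrite Rabs_right; lra.
Qed.

Lemma gap_sep (a : R) (K b x y : Z) : 1 < a < 2 -> b <> 0%Z ->
  (Z.abs x <= K)%Z -> (Z.abs y <= K)%Z -> (Z.abs (x + b) <= K)%Z -> (Z.abs (y + b) <= K)%Z ->
  IZR (Z.abs (y - x)) * IZR (Z.abs b) * (cvx a * curv a K) <= Rabs (gap a b y - gap a b x).
Proof.
  intros Ha Hb Hx Hy Hxb Hyb.
  destruct (Z_le_gt_dec x y) as [h|h]; [apply gap_sep_ordered; auto|].
  rewrite Rabs_minus_sym. replace (Z.abs (y - x)) with (Z.abs (x - y)) by lia.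
  apply gap_sep_ordered; auto; lia.
Qed.

Definition sumL {A : Type} (l : list A) (f : A -> R) : R :=
  fold_right (fun x acc => f x + acc) 0 l.

Definition indb (b : bool) : R := if b then 1 else 0.

Lemma indb_nonneg (b : bool) : 0 <= indb b.
Proof. destruct b; simpl; lra. Qed.

Lemma sumL_app {A : Type} (l1 l2 : list A) (f : A -> R) :
  sumL (l1 ++ l2) f = sumL l1 f + sumL l2 f.
Proof. induction l1; simpl; [ring|]. unfold sumL in *. simpl. rewrite IHl1. ring. Qed.

Lemma sumL_map {A B : Type} (g : A -> B) (l : list A) (f : B -> R) :
  sumL (map g l) f = sumL l (fun x => f (g x)).
Proof. induction l; simpl; auto. unfold sumL in *; simpl; rewrite IHl; auto. Qed.

Lemma sumL_le {A : Type} (l : list A) (f g : A -> R) :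
  (forall x, In x l -> f x <= g x) -> sumL l f <= sumL l g.
Proof.
  induction l as [|x l IH]; intros H; simpl; [lra|].
  pose proof (H x (or_introl eq_refl)). pose proof (IH (fun y Hy => H y (or_intror Hy))).
  unfold sumL in *; simpl. lra.
Qed.

Lemma sumL_ext {A : Type} (l : list A) (f g : A -> R) :
  (forall x, In x l -> f x = g x) -> sumL l f = sumL l g.
Proof. intros Hfg. apply Rle_antisym; apply sumL_le; intros; rewrite Hfg; auto; lra. Qed.

Lemma sumL_nonneg {A : Type} (l : list A) (f : A -> R) :
  (forall x, In x l -> 0 <= f x) -> 0 <= sumL l f.
Proof.
  intros H. apply Rle_trans with (sumL l (fun _ => 0)); [|apply sumL_le; auto].
  right. induction l; unfold sumL in *; simpl; [reflexivity|]. rewrite <- IHl; [ring|].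
  intros; apply H; right; auto.
Qed.

Lemma sumL_plus {A : Type} (l : list A) (f g : A -> R) :
  sumL l (fun x => f x + g x) = sumL l f + sumL l g.
Proof. induction l; unfold sumL in *; simpl; [ring|]. rewrite IHl. ring. Qed.

Lemma sumL_scal {A : Type} (l : list A) (c : R) (f : A -> R) :
  sumL l (fun x => c * f x) = c * sumL l f.
Proof. induction l; unfold sumL in *; simpl; [ring|]. rewrite IHl. ring. Qed.

Lemma sumL_const {A : Type} (l : list A) (c : R) : sumL l (fun _ => c) = c * INR (length l).
Proof.
  induction l; unfold sumL in *; simpl length; [simpl; ring|].
  rewrite S_INR. simpl. rewrite IHl. ring.
Qed.

Lemma sumL_swap {A B : Type} (l1 : list A) (l2 : list B) (f : A -> B -> R) :
  sumL l1 (fun x => sumL l2 (fun y => f x y)) = sumL l2 (fun y => sumL l1 (fun x => f x y)).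
Proof.
  induction l1 as [|x l1 IH].
  - change (0 = sumL l2 (fun _ => 0)). rewrite sumL_const. ring.
  - change (sumL l2 (fun y => f x y) + sumL l1 (fun x0 => sumL l2 (fun y => f x0 y)) =
      sumL l2 (fun y => f x y + sumL l1 (fun x0 => f x0 y))).
    rewrite sumL_plus, IH. reflexivity.
Qed.

Lemma sumL_prod {A B : Type} (l1 : list A) (l2 : list B) (f : A * B -> R) :
  sumL (list_prod l1 l2) f = sumL l1 (fun x => sumL l2 (fun y => f (x, y))).
Proof. induction l1 as [|x l1 IH]; simpl; [reflexivity|]. rewrite sumL_app, sumL_map, IH. reflexivity. Qed.

Lemma length_filter_sum {A : Type} (q : A -> bool) (l : list A) :
  INR (length (filter q l)) = sumL l (fun x => indb (q x)).
Proof.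
  induction l as [|x l IH]; [reflexivity|].
  change (sumL (x :: l) (fun x => indb (q x))) with (indb (q x) + sumL l (fun x => indb (q x))).
  simpl filter. destruct (q x); simpl length; unfold indb at 1.
  - rewrite S_INR, IH. ring.
  - rewrite IH. ring.
Qed.

Lemma sumL_collapse {A : Type} (l : list A) (q : A -> bool) (u0 : A) : NoDup l ->
  (forall u, q u = true -> u = u0) -> sumL l (fun u => indb (q u)) <= indb (q u0).
Proof.
  intros Hnd Hq. rewrite <- length_filter_sum.
  destruct (q u0) eqn:E; simpl indb.
  - apply (le_INR _ 1). apply NoDup_incl_length with (l' := [u0]).
    + apply NoDup_filter; auto.
    + intros u Hu. apply filter_In in Hu. left. symmetry. apply Hq. tauto.
  - destruct (filter q l) as [|u l'] eqn:F; [simpl; lra|].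
    assert (Hu : In u (filter q l)) by (rewrite F; left; auto).
    apply filter_In in Hu. destruct Hu as [_ Hu]. rewrite (Hq u Hu) in Hu. congruence.
Qed.

Lemma sumL_sub {A : Type} (l1 l2 : list A) (f : A -> R) : NoDup l1 ->
  (forall x, In x l1 -> f x = 0 \/ In x l2) ->
  (forall x, In x l1 -> 0 <= f x) -> (forall x, In x l2 -> 0 <= f x) ->
  sumL l1 f <= sumL l2 f.
Proof.
  intros Hnd. revert l2. induction Hnd as [|x l1 Hx Hnd IH]; intros l2 Hinc Hf1 Hf.
  - simpl. apply sumL_nonneg; auto.
  - change (sumL (x :: l1) f) with (f x + sumL l1 f).
    destruct (Hinc x (or_introl eq_refl)) as [H0|Hin].
    + rewrite H0.
      assert (sumL l1 f <= sumL l2 f).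
      { apply IH; auto; intros y Hy; [apply Hinc|apply Hf1]; right; auto. }
      lra.
    + destruct (in_split x l2 Hin) as [la [lb Heq]]. subst l2.
      rewrite sumL_app. change (sumL (x :: lb) f) with (f x + sumL lb f).
      assert (HIH : sumL l1 f <= sumL (la ++ lb) f).
      { apply IH.
        - intros y Hy. destruct (Hinc y (or_intror Hy)) as [Hz|Hy2]; [left; auto|right].
          apply in_app_or in Hy2. apply in_or_app. destruct Hy2 as [Hy2|[Hy2|Hy2]]; auto.
          subst; contradiction.
        - intros y Hy. apply Hf1. right. auto.
        - intros y Hy. apply Hf. apply in_app_or in Hy. apply in_or_app. simpl. tauto. }
      rewrite sumL_app in HIH. lra.
Qed.

Lemma in_zrange (a x : Z) : (0 <= a)%Z -> In x (zrange a) <-> (Z.abs x <= a)%Z.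
Proof.
  intros Ha. unfold zrange. rewrite in_map_iff. split.
  - intros [i [Hi Hin]]. apply in_seq in Hin. lia.
  - intros Hx. exists (Z.to_nat (x + a)). split; [lia|]. apply in_seq. lia.
Qed.

Lemma NoDup_zrange (a : Z) : NoDup (zrange a).
Proof.
  unfold zrange. apply NoDup_map_NoDup_ForallPairs; [|apply seq_NoDup].
  intros i j _ _ H. lia.
Qed.

Lemma length_zrange (n : Z) : (0 <= n)%Z -> INR (length (zrange n)) = 2 * IZR n + 1.
Proof.
  intros Hn. unfold zrange. rewrite length_map, length_seq.
  rewrite INR_IZR_INZ, Z2Nat.id by lia. rewrite plus_IZR, mult_IZR. reflexivity.
Qed.

Lemma diam_count (l : list Z) (D : R) : NoDup l -> 0 <= D ->
  (forall x y, In x l -> In y l -> IZR (Z.abs (x - y)) <= D) ->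
  INR (length l) <= 2 * D + 1.
Proof.
  intros Hnd HD Hd. destruct l as [|x0 l']; [simpl; lra|].
  destruct (archimed D) as [Hu1 Hu2].
  set (n := (up D - 1)%Z).
  assert (Hn0 : (0 <= n)%Z).
  { unfold n. assert (IZR 0 < IZR (up D)) by lra. apply lt_IZR in H. lia. }
  set (ball := map (fun x => (x0 + x)%Z) (zrange n)).
  assert (Hinc : incl (x0 :: l') ball).
  { intros y Hy. unfold ball. apply in_map_iff. exists (y - x0)%Z. split; [lia|].
    apply in_zrange; auto.
    pose proof (Hd y x0 Hy (or_introl eq_refl)).
    assert (IZR (Z.abs (y - x0)) < IZR (up D)) by lra.
    apply lt_IZR in H0. unfold n. lia. }
  pose proof (NoDup_incl_length Hnd Hinc) as Hle.
  apply le_INR in Hle. unfold ball in Hle. rewrite length_map, length_zrange in Hle by auto.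
  unfold n in Hle. rewrite minus_IZR in Hle. lra.
Qed.

Lemma harmonic_step (n : R) : 1 <= n -> / (n + 1) <= ln (n + 1) - ln n.
Proof.
  intros Hn.
  pose proof (exp_ineq1_le (- / (n + 1))) as He.
  assert (Hp : 0 < 1 + - / (n + 1)).
  { assert (/ (n + 1) < 1). { apply (Rmult_lt_reg_r (n+1)); [lra|]. field_simplify; lra. } lra. }
  apply ln_le_mono in He; auto. rewrite ln_exp in He.
  replace (1 + - / (n + 1)) with (n * / (n + 1)) in He by (field; lra).
  rewrite ln_mult, ln_Rinv in He by (try apply Rinv_0_lt_compat; lra). lra.
Qed.

Definition harmonic (n : nat) : R := sumL (seq 1 n) (fun j => / INR j).

Lemma harmonic_le (n : nat) : (1 <= n)%nat -> harmonic n <= 1 + ln (INR n).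
Proof.
  induction n as [|n IH]; intros Hn; [lia|].
  destruct (Nat.eq_dec n 0) as [->|Hn0].
  - unfold harmonic. simpl. unfold sumL. simpl. rewrite ln_1. lra.
  - assert (E : harmonic (S n) = harmonic n + / INR (S n)).
    { unfold harmonic. rewrite seq_S, sumL_app.
      change (sumL [(1 + n)%nat] (fun j => / INR j)) with (/ INR (1 + n) + 0).
      replace (1 + n)%nat with (S n) by lia. ring. }
    rewrite E. specialize (IH ltac:(lia)).
    rewrite S_INR. assert (Hn1 : 1 <= INR n) by (apply (le_INR 1); lia).
    pose proof (harmonic_step (INR n) Hn1). lra.
Qed.

Definition invZ (b : Z) : R := if Z.eq_dec b 0 then 0 else / IZR (Z.abs b).

Lemma invZ_nonneg (b : Z) : 0 <= invZ b.
Proof.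
  unfold invZ. destruct (Z.eq_dec b 0); [lra|].
  left. apply Rinv_0_lt_compat. apply IZR_lt. lia.
Qed.

Lemma invZ_sum (n : Z) : (1 <= n)%Z -> sumL (zrange n) invZ <= 2 * (1 + ln (IZR n)).
Proof.
  intros Hn. set (nn := Z.to_nat n).
  set (l2 := map Z.of_nat (seq 1 nn) ++ map (fun j => (- Z.of_nat j)%Z) (seq 1 nn)).
  apply Rle_trans with (sumL l2 invZ).
  - apply sumL_sub; [apply NoDup_zrange| |intros; apply invZ_nonneg|intros; apply invZ_nonneg].
    intros x Hx. apply in_zrange in Hx; [|lia].
    destruct (Z.eq_dec x 0) as [->|Hx0]; [left; reflexivity|].
    right. unfold l2. apply in_or_app. destruct (Z_lt_le_dec 0 x).
    + left. apply in_map_iff. exists (Z.to_nat x). split; [lia|]. apply in_seq. unfold nn. lia.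
    + right. apply in_map_iff. exists (Z.to_nat (- x)). split; [lia|]. apply in_seq. unfold nn. lia.
  - unfold l2. rewrite sumL_app, !sumL_map.
    assert (E : forall g : nat -> Z, (forall j, Z.abs (g j) = Z.of_nat j) ->
      sumL (seq 1 nn) (fun j => invZ (g j)) = harmonic nn).
    { intros g Hg. unfold harmonic. apply sumL_ext. intros j Hj. apply in_seq in Hj.
      unfold invZ. destruct (Z.eq_dec (g j) 0) as [e|]; [specialize (Hg j); lia|].
      rewrite Hg, <- INR_IZR_INZ. reflexivity. }
    rewrite (E Z.of_nat) by (intros; lia). rewrite (E (fun j => (- Z.of_nat j)%Z)) by (intros; lia).
    assert (HnR : INR nn = IZR n) by (unfold nn; rewrite INR_IZR_INZ; f_equal; lia).
    pose proof (harmonic_le nn ltac:(unfold nn; lia)) as HHl. rewrite HnR in HHl. lra.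
Qed.

Lemma invZ_sum_shift (N k : Z) : (1 <= N)%Z ->
  sumL (zrange N) (fun x => invZ (x - k)) <= 2 * (1 + ln (IZR (3 * N))) + 3.
Proof.
  intros HN. destruct (Z_le_gt_dec (Z.abs k) (2 * N)) as [hk|hk].
  - rewrite <- (sumL_map (fun x => (x - k)%Z) (zrange N) invZ).
    pose proof (invZ_sum (3 * N) ltac:(lia)).
    cut (sumL (map (fun x => (x - k)%Z) (zrange N)) invZ <= sumL (zrange (3 * N)) invZ); [lra|].
    apply sumL_sub; [| |intros; apply invZ_nonneg|intros; apply invZ_nonneg].
    + apply NoDup_map_NoDup_ForallPairs; [|apply NoDup_zrange]. intros x y _ _ E; lia.
    + intros b Hb. right. apply in_map_iff in Hb. destruct Hb as [x [<- Hx]].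
      apply in_zrange in Hx; [|lia]. apply in_zrange; lia.
  - apply Rle_trans with (sumL (zrange N) (fun _ => / IZR N)).
    + apply sumL_le. intros x Hx. apply in_zrange in Hx; [|lia].
      unfold invZ. destruct (Z.eq_dec (x - k) 0); [left; apply Rinv_0_lt_compat; apply IZR_lt; lia|].
      apply Rinv_le_contravar; [apply IZR_lt; lia|]. apply IZR_le. lia.
    + rewrite sumL_const, length_zrange by lia.
      assert (HNr : 1 <= IZR N) by (apply IZR_le; lia).
      assert (0 <= ln (IZR (3 * N))).
      { rewrite <- ln_1. apply ln_le_mono; [lra|]. apply IZR_le; lia. }
      replace (/ IZR N * (2 * IZR N + 1)) with (2 + / IZR N) by (field; lra).
      assert (/ IZR N <= 1) by (rewrite <- Rinv_1; apply Rinv_le_contravar; lra). lra.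
Qed.

(** * Line counts *)

(* Points x of a window whose gap of shift b lies in a band of width 2 C0 are
   pairwise close, by gap separation; this bounds their number. *)
Lemma line_count (a C0 : R) (L b : Z) (mu : R) (l : list Z) : 1 < a < 2 -> b <> 0%Z ->
  (0 <= L)%Z -> 0 <= C0 -> NoDup l ->
  (forall x, In x l -> ((Z.abs x <= L)%Z \/ (Z.abs (x + b) <= L)%Z) /\ Rabs (gap a b x - mu) <= C0) ->
  INR (length l) <= 2 * (2 * C0 * Rpower (IZR (L + Z.abs b) + 2) (2 - a) / (cvx a * IZR (Z.abs b))) + 1.
Proof.
  intros Ha Hb HL HC Hnd Hl.
  set (K := (L + Z.abs b)%Z).
  assert (Hc := cvx_pos a Ha). assert (Hk := curv_pos a K).
  assert (Hbp : 0 < IZR (Z.abs b)) by (apply IZR_lt; lia).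
  assert (Hinv : Rpower (IZR K + 2) (2 - a) = / curv a K).
  { unfold curv. pose proof (Rpower_inv_mul (IZR K + 2) (a - 2)).
    replace (- (a - 2)) with (2 - a) in H by ring.
    assert (0 < Rpower (IZR K + 2) (a - 2)) by apply Rpower_pos.
    field_simplify_eq; [|lra]. lra. }
  apply diam_count; auto.
  - rewrite Hinv. apply Rmult_le_pos; [|left; apply Rinv_0_lt_compat; nra].
    apply Rmult_le_pos; [lra|left; apply Rinv_0_lt_compat; auto].
  - intros x y Hx Hy.
    destruct (Hl x Hx) as [Bx Vx]. destruct (Hl y Hy) as [By Vy].
    pose proof (gap_sep a K b y x Ha Hb ltac:(unfold K; lia) ltac:(unfold K; lia)
                  ltac:(unfold K; lia) ltac:(unfold K; lia)) as S.
    assert (Rabs (gap a b x - gap a b y) <= 2 * C0).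
    { replace (gap a b x - gap a b y) with ((gap a b x - mu) - (gap a b y - mu)) by ring.
      eapply Rle_trans; [apply Rabs_triang|]. rewrite Rabs_Ropp. lra. }
    rewrite Hinv.
    assert (Hpp : 0 < IZR (Z.abs b) * (cvx a * curv a K)) by (apply Rmult_lt_0_compat; auto; nra).
    apply (Rmult_le_reg_r (IZR (Z.abs b) * (cvx a * curv a K))); auto.
    replace (2 * C0 * / curv a K / (cvx a * IZR (Z.abs b)) * (IZR (Z.abs b) * (cvx a * curv a K)))
      with (2 * C0) by (field; lra).
    lra.
Qed.

Definition line_bound (a C0 : R) (L b : Z) : R :=
  if Z.eq_dec b 0 then 0 else
  2 * (2 * C0 * Rpower (IZR (L + Z.abs b) + 2) (2 - a) / (cvx a * IZR (Z.abs b))) + 1.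

Lemma line_bound_abs (a C0 : R) (L b b' : Z) :
  Z.abs b = Z.abs b' -> line_bound a C0 L b = line_bound a C0 L b'.
Proof.
  intros E. unfold line_bound. rewrite E.
  destruct (Z.eq_dec b 0), (Z.eq_dec b' 0); try lia; reflexivity.
Qed.

Lemma line_count_sum (a C0 : R) (L M b : Z) (mu : R) (q : Z -> bool) : 1 < a < 2 -> 0 <= C0 ->
  (0 <= L)%Z ->
  (forall x, q x = true -> b <> 0%Z /\ ((Z.abs x <= L)%Z \/ (Z.abs (x + b) <= L)%Z) /\
     Rabs (gap a b x - mu) <= C0) ->
  sumL (zrange M) (fun x => indb (q x)) <= line_bound a C0 L b.
Proof.
  intros Ha HC HL Hq. rewrite <- length_filter_sum.
  unfold line_bound. destruct (Z.eq_dec b 0) as [Hb|Hb].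
  - destruct (filter q (zrange M)) as [|x l] eqn:E; [simpl; lra|].
    exfalso. assert (In x (filter q (zrange M))) by (rewrite E; left; auto).
    apply filter_In in H. destruct (Hq x (proj2 H)). auto.
  - apply (line_count a C0 L b mu); auto.
    + apply NoDup_filter, NoDup_zrange.
    + intros x Hx. apply filter_In in Hx. destruct (Hq x (proj2 Hx)) as [_ [? ?]]. auto.
Qed.

Definition band_ratio (a C0 : R) : R := 8 * C0 / cvx a.

Lemma band_ratio_nonneg (a C0 : R) : 1 < a < 2 -> 0 <= C0 -> 0 <= band_ratio a C0.
Proof.
  intros Ha HC. pose proof (cvx_pos a Ha).
  apply Rmult_le_pos; [lra|left; apply Rinv_0_lt_compat; auto].
Qed.

Lemma line_bound_le (a C0 : R) (L b : Z) : 1 < a < 2 -> 0 <= C0 -> (1 <= L)%Z ->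
  line_bound a C0 L b <=
  band_ratio a C0 * 3 * Rpower (IZR L) (2 - a) * invZ b + (band_ratio a C0 + 1).
Proof.
  intros Ha HC HL.
  assert (Hc := cvx_pos a Ha). assert (HA := band_ratio_nonneg a C0 Ha HC).
  assert (HLr : 1 <= IZR L) by (apply IZR_le; lia).
  pose proof (Rpower_pos (IZR L) (2 - a)).
  unfold line_bound, invZ. destruct (Z.eq_dec b 0) as [_|Hb]; [nra|].
  assert (Hbr : 1 <= IZR (Z.abs b)) by (apply IZR_le; lia).
  set (beta := 2 - a).
  assert (S1 : Rpower (IZR (L + Z.abs b) + 2) beta <=
               2 * (Rpower (IZR L + 2) beta + Rpower (IZR (Z.abs b)) beta)).
  { rewrite plus_IZR. replace (IZR L + IZR (Z.abs b) + 2) with ((IZR L + 2) + IZR (Z.abs b)) by ring.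
    apply Rpower_sum_le; unfold beta; lra. }
  assert (S2 : Rpower (IZR L + 2) beta <= 3 * Rpower (IZR L) beta).
  { apply Rle_trans with (Rpower (3 * IZR L) beta); [apply Rle_Rpower_l; unfold beta; lra|].
    rewrite <- Rpower_mult_distr by lra.
    assert (Rpower 3 beta <= 3) by (apply Rpower_le_self; unfold beta; lra).
    pose proof (Rpower_pos (IZR L) beta). nra. }
  assert (S3 : Rpower (IZR (Z.abs b)) beta <= IZR (Z.abs b)) by (apply Rpower_le_self; unfold beta; lra).
  assert (Hib : 0 < / IZR (Z.abs b)) by (apply Rinv_0_lt_compat; lra).
  set (X := Rpower (IZR (L + Z.abs b) + 2) beta) in *.
  set (Y := Rpower (IZR L) beta) in *.
  replace (2 * (2 * C0 * X / (cvx a * IZR (Z.abs b))) + 1) with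
    ((band_ratio a C0 / 2) * (X * / IZR (Z.abs b)) + 1) by (unfold band_ratio; field; lra).
  assert (X * / IZR (Z.abs b) <= 2 * (3 * Y * / IZR (Z.abs b) + 1)).
  { apply Rle_trans with (2 * (3 * Y + IZR (Z.abs b)) * / IZR (Z.abs b)).
    - apply Rmult_le_compat_r; lra.
    - right. field. lra. }
  nra.
Qed.

Definition C_line (a C0 : R) : R := 30 * band_ratio a C0 + 3.

Lemma line_bound_sum (a C0 : R) (L N k : Z) : 1 < a < 2 -> 0 <= C0 -> (1 <= L)%Z -> (1 <= N)%Z ->
  sumL (zrange N) (fun x => line_bound a C0 L (x - k)) <= C_line a C0 * bnd a L N.
Proof.
  intros Ha HC HL HN.
  set (A := band_ratio a C0). assert (HA : 0 <= A) by (apply band_ratio_nonneg; auto).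
  set (Y := Rpower (IZR L) (2 - a)). assert (HY : 0 < Y) by apply Rpower_pos.
  apply Rle_trans with (sumL (zrange N) (fun x => (A * 3 * Y) * invZ (x - k) + (A + 1))).
  { apply sumL_le. intros x _. apply line_bound_le; auto. }
  rewrite sumL_plus, sumL_scal, sumL_const, length_zrange by lia.
  pose proof (invZ_sum_shift N k HN) as Hs.
  assert (HNr : 1 <= IZR N) by (apply IZR_le; lia).
  assert (Hl3 : ln (IZR (3 * N)) <= 2 * ln (2 + IZR N)).
  { rewrite mult_IZR, ln_mult by lra.
    pose proof ln3_ge1. assert (ln 3 <= ln (2 + IZR N)) by (apply ln_le_mono; lra).
    assert (ln (IZR N) <= ln (2 + IZR N)) by (apply ln_le_mono; lra). lra. }
  pose proof (ln_2plus_ge1 N HN).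
  assert (Hs' : sumL (zrange N) (fun x => invZ (x - k)) <= 9 * ln (2 + IZR N)) by lra.
  unfold bnd, C_line. fold A Y.
  assert (0 <= A * 3 * Y) by nra.
  assert (A * 3 * Y * sumL (zrange N) (fun x => invZ (x - k)) <= A * 3 * Y * (9 * ln (2 + IZR N)))
    by (apply Rmult_le_compat_l; auto).
  nra.
Qed.

(* A double sum whose row x is a line of shift sh x, with |sh x| = |x - k|,
   inside a window of radius L: this is the common shape of six of the bounds. *)
Lemma lines_double_sum (a C0 : R) (L N M k : Z) (sh : Z -> Z) (mu : Z -> R)
    (q : Z -> Z -> bool) : 1 < a < 2 -> 0 <= C0 -> (1 <= L)%Z -> (1 <= N)%Z ->
  (forall x, Z.abs (sh x) = Z.abs (x - k)) ->
  (forall x y, q x y = true -> sh x <> 0%Z /\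
     ((Z.abs y <= L)%Z \/ (Z.abs (y + sh x) <= L)%Z) /\ Rabs (gap a (sh x) y - mu x) <= C0) ->
  sumL (zrange N) (fun x => sumL (zrange M) (fun y => indb (q x y))) <= C_line a C0 * bnd a L N.
Proof.
  intros Ha HC HL HN Hsh Hq.
  eapply Rle_trans; [|apply (line_bound_sum a C0 L N k); auto].
  apply sumL_le; intros x _. rewrite <- (line_bound_abs a C0 L (sh x)) by apply Hsh.
  apply (line_count_sum a C0 L M (sh x) (mu x) (q x)); auto; lia.
Qed.

(** * Fibres of S as double sums, and the six line bounds *)

Definition resonant (a C0 m : R) (k k1 k2 k3 : Z) : Prop :=
  Rabs (phi a k1 - phi a k2 + phi a k3 - phi a k - m) <= C0.

Lemma inS_spec (a C0 m : R) (N N1 N2 N3 k k1 k2 k3 : Z) :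
  inS a C0 m N N1 N2 N3 k k1 k2 k3 = true ->
  k = (k1 - k2 + k3)%Z /\ k2 <> k1 /\ k2 <> k3 /\ resonant a C0 m k k1 k2 k3 /\
  (Z.abs k <= N)%Z /\ (Z.abs k1 <= N1)%Z /\ (Z.abs k2 <= N2)%Z /\ (Z.abs k3 <= N3)%Z.
Proof.
  unfold inS. intros Hq.
  repeat (apply andb_prop in Hq; destruct Hq as [Hq ?]).
  apply Z.eqb_eq in Hq.
  repeat match goal with
  | h : negb (Z.eqb _ _) = true |- _ => rewrite Bool.negb_true_iff, Z.eqb_neq in h
  | h : Z.leb _ _ = true |- _ => apply Z.leb_le in h
  | h : (if Rle_dec ?x ?y then true else false) = true |- _ =>
      destruct (Rle_dec x y); [clear h|discriminate]
  end.
  unfold resonant, phi. repeat split; auto.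
Qed.

Lemma Rabs_le_eq (x y C : R) : x = y -> Rabs y <= C -> Rabs x <= C.
Proof. intros ->. auto. Qed.

(* Eliminating the variable that the equation k = k1 - k2 + k3 determines. *)
Lemma collapse_outer (A B C : list Z) (f : Z -> Z -> Z -> bool) (h : Z -> Z -> Z) :
  NoDup A -> (forall k u v, f k u v = true -> k = h u v) ->
  sumL A (fun k => sumL B (fun u => sumL C (fun v => indb (f k u v)))) <=
  sumL B (fun u => sumL C (fun v => indb (f (h u v) u v))).
Proof.
  intros HA Hf. rewrite sumL_swap. apply sumL_le; intros u _. rewrite sumL_swap.
  apply sumL_le; intros v _. apply (sumL_collapse A (fun k => f k u v)); auto.
Qed.

Lemma card_Sk_double (a C0 m : R) (N N1 N2 N3 k : Z) :
  INR (card_Sk a C0 m N N1 N2 N3 k) <= sumL (zrange N1) (fun k1 => sumL (zrange N3) (fun k3 =>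
    indb (inS a C0 m N N1 N2 N3 k k1 (k1 + k3 - k) k3))).
Proof.
  unfold card_Sk, box3. rewrite length_filter_sum, !sumL_prod.
  apply sumL_le; intros k1 _. rewrite sumL_swap. apply sumL_le; intros k3 _.
  apply (sumL_collapse _ (fun u => inS a C0 m N N1 N2 N3 k k1 u k3)); [apply NoDup_zrange|].
  intros u Hu. apply inS_spec in Hu. lia.
Qed.

Lemma card_Sk1_double (a C0 m : R) (N N1 N2 N3 k1 : Z) :
  INR (card_Sk1 a C0 m N N1 N2 N3 k1) <= sumL (zrange N2) (fun k2 => sumL (zrange N3) (fun k3 =>
    indb (inS a C0 m N N1 N2 N3 (k1 - k2 + k3) k1 k2 k3))).
Proof.
  unfold card_Sk1, box3. rewrite length_filter_sum, !sumL_prod.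
  apply (collapse_outer _ _ _ (fun k k2 k3 => inS a C0 m N N1 N2 N3 k k1 k2 k3)
    (fun k2 k3 => (k1 - k2 + k3)%Z)); [apply NoDup_zrange|].
  intros k u v Hk. apply inS_spec in Hk. lia.
Qed.

Lemma card_Sk2_double (a C0 m : R) (N N1 N2 N3 k2 : Z) :
  INR (card_Sk2 a C0 m N N1 N2 N3 k2) <= sumL (zrange N1) (fun k1 => sumL (zrange N3) (fun k3 =>
    indb (inS a C0 m N N1 N2 N3 (k1 - k2 + k3) k1 k2 k3))).
Proof.
  unfold card_Sk2, box3. rewrite length_filter_sum, !sumL_prod.
  apply (collapse_outer _ _ _ (fun k k1 k3 => inS a C0 m N N1 N2 N3 k k1 k2 k3)
    (fun k1 k3 => (k1 - k2 + k3)%Z)); [apply NoDup_zrange|].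
  intros k u v Hk. apply inS_spec in Hk. lia.
Qed.

Lemma card_Sk3_double (a C0 m : R) (N N1 N2 N3 k3 : Z) :
  INR (card_Sk3 a C0 m N N1 N2 N3 k3) <= sumL (zrange N1) (fun k1 => sumL (zrange N2) (fun k2 =>
    indb (inS a C0 m N N1 N2 N3 (k1 - k2 + k3) k1 k2 k3))).
Proof.
  unfold card_Sk3, box3. rewrite length_filter_sum, !sumL_prod.
  apply (collapse_outer _ _ _ (fun k k1 k2 => inS a C0 m N N1 N2 N3 k k1 k2 k3)
    (fun k1 k2 => (k1 - k2 + k3)%Z)); [apply NoDup_zrange|].
  intros k u v Hk. apply inS_spec in Hk. lia.
Qed.

Section LineBounds.

Variables (a C0 m : R) (N N1 N2 N3 : Z).
Hypotheses (Ha : 1 < a < 2) (HC0 : 0 <= C0).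
Hypotheses (HN1 : (1 <= N1)%Z) (HN2 : (1 <= N2)%Z) (HN3 : (1 <= N3)%Z).

(* S_k: the lines are k1 = const, on which phi k3 - phi k2 is nearly constant *)
Lemma card_Sk_lines_k1 (k : Z) :
  INR (card_Sk a C0 m N N1 N2 N3 k) <= C_line a C0 * bnd a (Z.min N2 N3) N1.
Proof.
  eapply Rle_trans; [apply card_Sk_double|].
  apply (lines_double_sum a C0 (Z.min N2 N3) N1 N3 k (fun k1 => k1 - k)%Z
    (fun k1 => m - phi a k1 + phi a k)); auto; try lia.
  intros k1 k3 Hq. apply inS_spec in Hq. destruct Hq as (E & D1 & D2 & V & B).
  split; [lia|]. split; [lia|].
  eapply Rabs_le_eq; [|exact V]. unfold gap.
  rewrite (phi_congr a (k3 + (k1 - k)) (k1 + k3 - k)) by lia. ring.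
Qed.

Lemma card_Sk_lines_k3 (k : Z) :
  INR (card_Sk a C0 m N N1 N2 N3 k) <= C_line a C0 * bnd a (Z.min N1 N2) N3.
Proof.
  eapply Rle_trans; [apply card_Sk_double|]. rewrite sumL_swap.
  apply (lines_double_sum a C0 (Z.min N1 N2) N3 N1 k (fun k3 => k3 - k)%Z
    (fun k3 => m - phi a k3 + phi a k)); auto; try lia.
  intros k3 k1 Hq. apply inS_spec in Hq. destruct Hq as (E & D1 & D2 & V & B).
  split; [lia|]. split; [lia|].
  eapply Rabs_le_eq; [|exact V]. unfold gap.
  rewrite (phi_congr a (k1 + (k3 - k)) (k1 + k3 - k)) by lia. ring.
Qed.

(* S_k1: the lines are k2 = const, on which phi k3 - phi k is nearly constant *)
Lemma card_Sk1_lines (k1 : Z) :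
  INR (card_Sk1 a C0 m N N1 N2 N3 k1) <= C_line a C0 * bnd a N3 N2.
Proof.
  eapply Rle_trans; [apply card_Sk1_double|].
  apply (lines_double_sum a C0 N3 N2 N3 k1 (fun k2 => k1 - k2)%Z
    (fun k2 => m - phi a k1 + phi a k2)); auto; try lia.
  intros k2 k3 Hq. apply inS_spec in Hq. destruct Hq as (E & D1 & D2 & V & B).
  split; [lia|]. split; [lia|].
  eapply Rabs_le_eq; [|exact V]. unfold gap.
  rewrite (phi_congr a (k3 + (k1 - k2)) (k1 - k2 + k3)) by lia. ring.
Qed.

Lemma card_Sk2_lines_k1 (k2 : Z) :
  INR (card_Sk2 a C0 m N N1 N2 N3 k2) <= C_line a C0 * bnd a N3 N1.
Proof.
  eapply Rle_trans; [apply card_Sk2_double|].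
  apply (lines_double_sum a C0 N3 N1 N3 k2 (fun k1 => k1 - k2)%Z
    (fun k1 => m - phi a k1 + phi a k2)); auto; try lia.
  intros k1 k3 Hq. apply inS_spec in Hq. destruct Hq as (E & D1 & D2 & V & B).
  split; [lia|]. split; [lia|].
  eapply Rabs_le_eq; [|exact V]. unfold gap.
  rewrite (phi_congr a (k3 + (k1 - k2)) (k1 - k2 + k3)) by lia. ring.
Qed.

Lemma card_Sk2_lines_k3 (k2 : Z) :
  INR (card_Sk2 a C0 m N N1 N2 N3 k2) <= C_line a C0 * bnd a N1 N3.
Proof.
  eapply Rle_trans; [apply card_Sk2_double|]. rewrite sumL_swap.
  apply (lines_double_sum a C0 N1 N3 N1 k2 (fun k3 => k3 - k2)%Z
    (fun k3 => m + phi a k2 - phi a k3)); auto; try lia.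
  intros k3 k1 Hq. apply inS_spec in Hq. destruct Hq as (E & D1 & D2 & V & B).
  split; [lia|]. split; [lia|].
  eapply Rabs_le_eq; [|exact V]. unfold gap.
  rewrite (phi_congr a (k1 + (k3 - k2)) (k1 - k2 + k3)) by lia. ring.
Qed.

(* S_k3: the lines are k2 = const *)
Lemma card_Sk3_lines (k3 : Z) :
  INR (card_Sk3 a C0 m N N1 N2 N3 k3) <= C_line a C0 * bnd a N1 N2.
Proof.
  eapply Rle_trans; [apply card_Sk3_double|]. rewrite sumL_swap.
  apply (lines_double_sum a C0 N1 N2 N1 k3 (fun k2 => k3 - k2)%Z
    (fun k2 => m + phi a k2 - phi a k3)); auto; try lia.
  intros k2 k1 Hq. apply inS_spec in Hq. destruct Hq as (E & D1 & D2 & V & B).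
  split; [lia|]. split; [lia|].
  eapply Rabs_le_eq; [|exact V]. unfold gap.
  rewrite (phi_congr a (k1 + (k3 - k2)) (k1 - k2 + k3)) by lia. ring.
Qed.

End LineBounds.

(** * The row argument *)

Section NondecreasingIncrements.

Variable f : Z -> R.
Hypothesis f_incr : forall u v, (u <= v)%Z -> f (u + 1) - f u <= f (v + 1) - f v.

Lemma incr_run (u v : Z) : (u <= v)%Z ->
  IZR (v - u) * (f (u + 1) - f u) <= f v - f u <= IZR (v - u) * (f (v + 1) - f v).
Proof.
  intros Huv. replace v with (u + Z.of_nat (Z.to_nat (v - u)))%Z by lia.
  induction (Z.to_nat (v - u)) as [|d IH].
  - replace (u + Z.of_nat 0)%Z with u by lia. replace (u - u)%Z with 0%Z by lia. lra.
  - set (w := (u + Z.of_nat d)%Z) in *.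
    replace (u + Z.of_nat (S d))%Z with (w + 1)%Z by (unfold w; lia).
    replace (w + 1 - u)%Z with ((w - u) + 1)%Z by lia. rewrite plus_IZR.
    pose proof (f_incr u w ltac:(unfold w; lia)). pose proof (f_incr w (w + 1) ltac:(lia)).
    assert (0 <= IZR (w - u)) by (apply IZR_le; unfold w; lia).
    assert (IZR (w - u) * (f (w + 1) - f w) <= IZR (w - u) * (f (w + 1 + 1) - f (w + 1)))
      by (apply Rmult_le_compat_l; lra).
    lra.
Qed.

Lemma steep_band_close (eta tau C0 : R) (x x' : Z) : 0 < eta ->
  Rabs (f x - tau) <= C0 -> Rabs (f x' - tau) <= C0 ->
  (eta <= f (x + 1) - f x /\ eta <= f (x' + 1) - f x') \/
  (f (x + 1) - f x <= - eta /\ f (x' + 1) - f x' <= - eta) ->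
  IZR (Z.abs (x - x')) <= 2 * C0 / eta.
Proof.
  intros He Vx Vx' Hs.
  assert (Hd : forall u v, (u <= v)%Z -> Rabs (f u - tau) <= C0 -> Rabs (f v - tau) <= C0 ->
     (eta <= f (u + 1) - f u) \/ (f (v + 1) - f v <= - eta) -> IZR (v - u) * eta <= 2 * C0).
  { intros u v Huv Vu Vv Su.
    pose proof (incr_run u v Huv) as Hr.
    assert (0 <= IZR (v - u)) by (apply IZR_le; lia).
    apply Rabs_le_inv in Vu. apply Rabs_le_inv in Vv.
    destruct Su as [Su|Su].
    - assert (IZR (v - u) * eta <= IZR (v - u) * (f (u + 1) - f u)) by (apply Rmult_le_compat_l; lra).
      lra.
    - assert (IZR (v - u) * (f (v + 1) - f v) <= IZR (v - u) * - eta) by (apply Rmult_le_compat_l; lra).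
      lra. }
  apply (Rmult_le_reg_r eta); auto. unfold Rdiv. rewrite Rmult_assoc, Rinv_l, Rmult_1_r by lra.
  destruct (Z_le_gt_dec x x').
  - rewrite Z.abs_neq by lia. replace (- (x - x'))%Z with (x' - x)%Z by lia.
    apply Hd; auto. destruct Hs as [[? ?]|[? ?]]; auto.
  - rewrite Z.abs_eq by lia. apply Hd; auto; [lia|]. destruct Hs as [[? ?]|[? ?]]; auto.
Qed.

End NondecreasingIncrements.

Definition row (a : R) (c x : Z) : R := phi a x + phi a (c - x).
Definition drow (a : R) (c x : Z) : R := dphi a x - dphi a (c - x - 1).

Lemma row_step (a : R) (c x : Z) : row a c (x + 1) - row a c x = drow a c x.
Proof.
  unfold row, drow, dphi.
  rewrite (phi_congr a (c - (x + 1)) (c - x - 1)), (phi_congr a (c - x - 1 + 1) (c - x)) by lia.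
  ring.
Qed.

Lemma row_incr (a : R) (c : Z) : 1 < a < 2 -> forall u v, (u <= v)%Z ->
  row a c (u + 1) - row a c u <= row a c (v + 1) - row a c v.
Proof.
  intros Ha u v Huv. rewrite !row_step. unfold drow.
  pose proof (dphi_mono a v u Ha Huv). pose proof (dphi_mono a (c - u - 1) (c - v - 1) Ha ltac:(lia)).
  lra.
Qed.

Lemma dphi_spread (a : R) (u v : Z) : 1 < a < 2 ->
  IZR (Z.abs (u - v)) * (cvx a * curv a (Z.abs u + Z.abs (u - v))) <= Rabs (dphi a u - dphi a v).
Proof.
  intros Ha. set (K := (Z.abs u + Z.abs (u - v))%Z).
  assert (Hpos : 0 < cvx a * curv a K) by (apply Rmult_lt_0_compat; [apply cvx_pos; auto|apply curv_pos]).
  destruct (Z_le_gt_dec u v) as [h|h].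
  - pose proof (dphi_run a K u (Z.to_nat (v - u)) Ha (fun t Ht => ltac:(unfold K; lia))) as R.
    rewrite INR_IZR_INZ, Z2Nat.id in R by lia. replace (u + (v - u))%Z with v in R by lia.
    assert (0 <= IZR (v - u)) by (apply IZR_le; lia).
    replace (Z.abs (u - v)) with (v - u)%Z by lia.
    rewrite Rabs_minus_sym, Rabs_right by nra. exact R.
  - pose proof (dphi_run a K v (Z.to_nat (u - v)) Ha (fun t Ht => ltac:(unfold K; lia))) as R.
    rewrite INR_IZR_INZ, Z2Nat.id in R by lia. replace (v + (u - v))%Z with u in R by lia.
    assert (0 <= IZR (u - v)) by (apply IZR_le; lia).
    replace (Z.abs (u - v)) with (u - v)%Z by lia.
    rewrite Rabs_right by nra. exact R.
Qed.

Lemma curv_half (a : R) (x : Z) : 1 < a < 2 ->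
  / 2 <= IZR (Z.abs x + 2) * curv a (Z.abs x + (Z.abs x + 2)).
Proof.
  intros Ha. unfold curv. set (L := IZR (Z.abs x + 2)).
  assert (HL : 2 <= L) by (unfold L; apply IZR_le; lia).
  replace (IZR (Z.abs x + (Z.abs x + 2)) + 2) with (2 * L) by (unfold L; rewrite !plus_IZR; ring).
  pose proof (Rpower_ge_inv (2 * L) (a - 2) ltac:(lra) ltac:(lra)).
  apply Rle_trans with (L * / (2 * L)); [right; field; lra|].
  apply Rmult_le_compat_l; lra.
Qed.

(* If dphi x and dphi v differ by less than c_a / 2, then |x - v| < |x| + 2:
   otherwise the point at distance |x| + 2 from x towards v would already
   produce a spread of c_a / 2. *)
Lemma flat_close (a : R) (x v : Z) : 1 < a < 2 ->
  Rabs (dphi a x - dphi a v) < cvx a / 2 -> (Z.abs (x - v) < Z.abs x + 2)%Z.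
Proof.
  intros Ha Hflat. assert (Hc := cvx_pos a Ha).
  destruct (Z_lt_le_dec (Z.abs (x - v)) (Z.abs x + 2)) as [|hD]; [auto|exfalso].
  set (w := if Z_le_dec x v then (x + (Z.abs x + 2))%Z else (x - (Z.abs x + 2))%Z).
  assert (Hw : Z.abs (x - w) = (Z.abs x + 2)%Z) by (unfold w; destruct (Z_le_dec x v); lia).
  pose proof (dphi_spread a x w Ha) as S. rewrite Hw in S.
  pose proof (curv_half a x Ha).
  assert (Rabs (dphi a x - dphi a w) <= Rabs (dphi a x - dphi a v)).
  { unfold w in *; destruct (Z_le_dec x v).
    - pose proof (dphi_mono a (x + (Z.abs x + 2)) x Ha ltac:(lia)).
      pose proof (dphi_mono a v (x + (Z.abs x + 2)) Ha ltac:(lia)).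
      rewrite !Rabs_left1 by lra. lra.
    - pose proof (dphi_mono a x (x - (Z.abs x + 2)) Ha ltac:(lia)).
      pose proof (dphi_mono a (x - (Z.abs x + 2)) v Ha ltac:(lia)).
      rewrite !Rabs_right by lra. lra. }
  assert (cvx a * / 2 <= cvx a * (IZR (Z.abs x + 2) * curv a (Z.abs x + (Z.abs x + 2))))
    by (apply Rmult_le_compat_l; lra).
  lra.
Qed.

(* Indeed D = |2 x + 1 - c|
   is the distance between x and c - x - 1, which is < |x| + 2 by flat_close, so
   the curvature scale between them is <= 2 K + 1 and D c_a (2 K + 3)^(a-2) < c_a / 2. *)
Lemma flat_near_diag (a : R) (c x K : Z) : 1 < a < 2 -> (Z.abs x <= K)%Z ->
  Rabs (drow a c x) < cvx a / 2 ->
  IZR (Z.abs (2 * x + 1 - c)) <= Rpower (IZR (2 * K + 1) + 2) (2 - a).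
Proof.
  intros Ha Hx Hflat. unfold drow in Hflat.
  set (v := (c - x - 1)%Z) in Hflat.
  replace (2 * x + 1 - c)%Z with (x - v)%Z by (unfold v; lia).
  pose proof (flat_close a x v Ha Hflat) as HD.
  pose proof (dphi_spread a x v Ha) as S.
  set (D := Z.abs (x - v)) in *.
  assert (Hc := cvx_pos a Ha).
  assert (Hcurv : curv a (2 * K + 1) <= curv a (Z.abs x + D)).
  { unfold curv. apply Rpower_antimono_base; [|lra]. split.
    - assert (0 <= IZR (Z.abs x + D)) by (apply IZR_le; unfold D; lia). lra.
    - apply Rplus_le_compat_r, IZR_le. lia. }
  assert (HDr : 0 <= IZR D) by (apply IZR_le; unfold D; lia).
  assert (HT : curv a (2 * K + 1) * Rpower (IZR (2 * K + 1) + 2) (2 - a) = 1).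
  { unfold curv. rewrite <- (Rpower_inv_mul (IZR (2 * K + 1) + 2) (a - 2)). f_equal. f_equal. ring. }
  pose proof (curv_pos a (2 * K + 1)). pose proof (Rpower_pos (IZR (2 * K + 1) + 2) (2 - a)).
  assert (IZR D * curv a (2 * K + 1) <= / 2).
  { apply (Rmult_le_reg_l (cvx a)); auto.
    assert (IZR D * curv a (2 * K + 1) <= IZR D * curv a (Z.abs x + D)) by (apply Rmult_le_compat_l; lra).
    nra. }
  assert (IZR D = IZR D * curv a (2 * K + 1) * Rpower (IZR (2 * K + 1) + 2) (2 - a))
    by (rewrite Rmult_assoc, HT; ring).
  nra.
Qed.

Definition invZ_cut (L b : Z) : R := if Z_le_dec (Z.abs b) L then invZ b else 0.

Lemma invZ_cut_nonneg (L b : Z) : 0 <= invZ_cut L b.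
Proof. unfold invZ_cut. destruct (Z_le_dec _ _); [apply invZ_nonneg|lra]. Qed.

(* For |b| > L the line count is O(1); hence the cut-off weight suffices. *)
Lemma line_bound_le_cut (a C0 : R) (L b : Z) : 1 < a < 2 -> 0 <= C0 -> (1 <= L)%Z ->
  line_bound a C0 L b <=
  band_ratio a C0 * 3 * Rpower (IZR L) (2 - a) * invZ_cut L b + (2 * band_ratio a C0 + 1).
Proof.
  intros Ha HC HL.
  assert (Hc := cvx_pos a Ha). assert (HA := band_ratio_nonneg a C0 Ha HC).
  unfold invZ_cut. destruct (Z_le_dec (Z.abs b) L) as [h|h].
  - pose proof (line_bound_le a C0 L b Ha HC HL). lra.
  - unfold line_bound. destruct (Z.eq_dec b 0) as [_|Hb]; [lra|].
    assert (Hbr : 1 <= IZR (Z.abs b)) by (apply IZR_le; lia).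
    assert (E1 : IZR (L + Z.abs b) + 2 <= 4 * IZR (Z.abs b)).
    { rewrite plus_IZR. assert (IZR L + 1 <= IZR (Z.abs b)) by (rewrite <- plus_IZR; apply IZR_le; lia).
      assert (1 <= IZR L) by (apply IZR_le; lia). lra. }
    assert (E2 : Rpower (IZR (L + Z.abs b) + 2) (2 - a) <= 4 * IZR (Z.abs b)).
    { eapply Rle_trans; [|apply E1]. apply Rpower_le_self; [|lra].
      rewrite plus_IZR. assert (0 <= IZR L) by (apply IZR_le; lia). lra. }
    rewrite Rmult_0_r, Rplus_0_l.
    assert (2 * C0 * Rpower (IZR (L + Z.abs b) + 2) (2 - a) / (cvx a * IZR (Z.abs b)) <= band_ratio a C0).
    { unfold Rdiv, band_ratio. rewrite Rinv_mult.
      apply Rle_trans with (2 * C0 * (4 * IZR (Z.abs b)) * (/ cvx a * / IZR (Z.abs b))).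
      - apply Rmult_le_compat_r.
        + apply Rmult_le_pos; left; apply Rinv_0_lt_compat; lra.
        + apply Rmult_le_compat_l; lra.
      - right. field. lra. }
    lra.
Qed.

Lemma invZ_cut_sum (N2 L z : Z) : (1 <= L)%Z -> (0 <= N2)%Z ->
  sumL (zrange N2) (fun x => invZ_cut L (z - x)) <= 2 * (1 + ln (IZR L)).
Proof.
  intros HL HN2. rewrite <- (sumL_map (fun x => (z - x)%Z) (zrange N2) (invZ_cut L)).
  eapply Rle_trans; [|apply (invZ_sum L HL)].
  apply Rle_trans with (sumL (zrange L) (invZ_cut L)).
  - apply sumL_sub; [| |intros; apply invZ_cut_nonneg|intros; apply invZ_cut_nonneg].
    + apply NoDup_map_NoDup_ForallPairs; [|apply NoDup_zrange]. intros x y _ _ E; lia.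
    + intros b _. unfold invZ_cut. destruct (Z_le_dec (Z.abs b) L); [right|left; auto].
      apply in_zrange; lia.
  - right. apply sumL_ext. intros b Hb. apply in_zrange in Hb; [|lia].
    unfold invZ_cut. destruct (Z_le_dec (Z.abs b) L); [reflexivity|lia].
Qed.

Definition near_diag (z : Z) (W : R) (x : Z) : bool :=
  if Rle_dec (IZR (Z.abs (2 * x + 1 - z))) W then true else false.

Lemma near_diag_count (M z : Z) (W : R) : 0 <= W ->
  sumL (zrange M) (fun x => indb (near_diag z W x)) <= 2 * W + 1.
Proof.
  intros HW. rewrite <- length_filter_sum. apply diam_count; auto.
  - apply NoDup_filter, NoDup_zrange.
  - intros x x' Hx Hx'. apply filter_In in Hx. apply filter_In in Hx'.
    unfold near_diag in Hx, Hx'.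
    destruct (Rle_dec _ W) as [h|]; [|destruct Hx; discriminate].
    destruct (Rle_dec _ W) as [h'|]; [|destruct Hx'; discriminate].
    assert (IZR (2 * Z.abs (x - x')) <= IZR (Z.abs (2 * x + 1 - z)) + IZR (Z.abs (2 * x' + 1 - z)))
      by (rewrite <- plus_IZR; apply IZR_le; lia).
    rewrite mult_IZR in H. lra.
Qed.

Definition steep_up (a : R) (c x : Z) : bool :=
  if Rle_dec (cvx a / 2) (drow a c x) then true else false.
Definition steep_down (a : R) (c x : Z) : bool :=
  if Rle_dec (drow a c x) (- (cvx a / 2)) then true else false.

Definition flat_width (a : R) (N2 : Z) : R := Rpower (IZR (2 * N2 + 1) + 2) (2 - a).

Definition C_row (a C0 : R) : R := 50 * band_ratio a C0 + 20.

Lemma row_arith (a A : R) (N2 Ny : Z) : 1 < a < 2 -> 0 <= A -> (1 <= Ny)%Z -> (Ny <= N2)%Z ->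
  A * 3 * Rpower (IZR Ny) (2 - a) * (2 * (1 + ln (IZR Ny)))
  + (2 * A + 1) * (2 * (IZR Ny + flat_width a N2) + 1)
  + ((A + 1) * (2 * IZR Ny + 1) + (A + 1) * (2 * IZR Ny + 1))
  <= (50 * A + 20) * bnd a N2 Ny.
Proof.
  intros Ha HA HNy Hle.
  assert (HNyr : 1 <= IZR Ny) by (apply IZR_le; lia).
  assert (HN2 : IZR Ny <= IZR N2) by (apply IZR_le; lia).
  set (Y := Rpower (IZR Ny) (2 - a)). set (Z2 := Rpower (IZR N2) (2 - a)).
  assert (HY0 : 0 < Y) by apply Rpower_pos.
  assert (HYZ : Y <= Z2) by (apply Rle_Rpower_l; lra).
  assert (HT : flat_width a N2 <= 5 * Z2).
  { unfold flat_width, Z2. apply Rle_trans with (Rpower (5 * IZR N2) (2 - a)).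
    - apply Rle_Rpower_l; [lra|]. rewrite plus_IZR, mult_IZR. lra.
    - rewrite <- Rpower_mult_distr by lra.
      assert (Rpower 5 (2 - a) <= 5) by (apply Rpower_le_self; lra).
      pose proof (Rpower_pos (IZR N2) (2 - a)). nra. }
  set (l := ln (2 + IZR Ny)).
  assert (Hl1 : 1 <= l) by (apply ln_2plus_ge1; lia).
  assert (Hln0 : 0 <= ln (IZR Ny)) by (rewrite <- ln_1; apply ln_le_mono; lra).
  assert (Hln : ln (IZR Ny) <= l) by (apply ln_le_mono; lra).
  unfold bnd. fold Z2 l.
  assert (X1 : A * 3 * Y * (2 * (1 + ln (IZR Ny))) <= 12 * A * Z2 * l).
  { apply Rle_trans with (A * 3 * Z2 * (2 * (2 * l))); [apply Rmult_le_compat; nra|nra]. }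
  assert (X2 : (2 * A + 1) * (2 * (IZR Ny + flat_width a N2) + 1) <= (2 * A + 1) * (3 * IZR Ny + 10 * Z2 * l)).
  { apply Rmult_le_compat_l; nra. }
  assert (0 <= Z2 * l) by nra. assert (0 <= A * Z2 * l) by (apply Rmult_le_pos; nra).
  assert (A <= A * IZR Ny) by nra.
  nra.
Qed.

Section RowArgument.

(* We count pairs (x, y), |x| <= N2, |y| <= Ny, x <> z, with
   phi z - phi x + phi y - phi (z - x + y) ~ m; the row of y is the row
   function of c = z + y, which is nearly constant on the resonant x. *)
Variables (a C0 m : R) (z N2 Ny : Z) (q : Z -> Z -> bool).
Hypotheses (Ha : 1 < a < 2) (HC0 : 0 <= C0) (HNy : (1 <= Ny)%Z) (HNyN2 : (Ny <= N2)%Z).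
Hypothesis Hq : forall x y, q x y = true ->
  x <> z /\ (Z.abs x <= N2)%Z /\ (Z.abs y <= Ny)%Z /\ resonant a C0 m (z - x + y) z x y.

Lemma resonant_row (x y : Z) : resonant a C0 m (z - x + y) z x y ->
  Rabs (row a (z + y) x - (phi a z + phi a y - m)) <= C0.
Proof.
  unfold resonant, row. intros V. rewrite (phi_congr a (z + y - x) (z - x + y)) by lia.
  rewrite <- Rabs_Ropp. eapply Rabs_le_eq; [|exact V]. ring.
Qed.

Lemma resonant_split (x y : Z) :
  indb (q x y) <= indb (q x y && near_diag z (IZR Ny + flat_width a N2) x) +
    (indb (q x y && steep_up a (z + y) x) + indb (q x y && steep_down a (z + y) x)).
Proof.
  destruct (q x y) eqn:E; [|simpl; lra]. simpl andb.
  pose proof (indb_nonneg (near_diag z (IZR Ny + flat_width a N2) x)).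
  pose proof (indb_nonneg (steep_down a (z + y) x)).
  destruct (steep_up a (z + y) x) eqn:EU; [simpl; lra|].
  destruct (steep_down a (z + y) x) eqn:ED; [simpl; lra|].
  unfold steep_up, steep_down in EU, ED.
  destruct (Rle_dec (cvx a / 2) (drow a (z + y) x)) as [|n1]; [discriminate|].
  destruct (Rle_dec (drow a (z + y) x) (- (cvx a / 2))) as [|n2]; [discriminate|].
  destruct (Hq x y E) as (_ & Bx & By & _).
  pose proof (flat_near_diag a (z + y) x N2 Ha Bx ltac:(apply Rabs_def1; lra)) as F.
  assert (Hnd : near_diag z (IZR Ny + flat_width a N2) x = true).
  { unfold near_diag, flat_width. destruct (Rle_dec _ _) as [|n]; [reflexivity|exfalso; apply n].
    apply Rle_trans with (IZR (Z.abs (2 * x + 1 - (z + y)) + Ny)); [apply IZR_le; lia|].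
    rewrite plus_IZR. lra. }
  rewrite Hnd. simpl. lra.
Qed.

(* near-diagonal x: the y form a line of shift z - x, counted by line_bound *)
Lemma near_diag_part (W : R) : 0 <= W ->
  sumL (zrange N2) (fun x => sumL (zrange Ny) (fun y => indb (q x y && near_diag z W x))) <=
  band_ratio a C0 * 3 * Rpower (IZR Ny) (2 - a) * (2 * (1 + ln (IZR Ny)))
  + (2 * band_ratio a C0 + 1) * (2 * W + 1).
Proof.
  intros HW. set (A := band_ratio a C0). assert (HA : 0 <= A) by (apply band_ratio_nonneg; auto).
  set (Y := Rpower (IZR Ny) (2 - a)). assert (HY : 0 < Y) by apply Rpower_pos.
  apply Rle_trans with
    (sumL (zrange N2) (fun x => A * 3 * Y * invZ_cut Ny (z - x) + (2 * A + 1) * indb (near_diag z W x))).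
  - apply sumL_le; intros x _.
    pose proof (invZ_cut_nonneg Ny (z - x)).
    destruct (near_diag z W x) eqn:EU.
    + apply Rle_trans with (line_bound a C0 Ny (z - x)).
      * apply (line_count_sum a C0 Ny Ny (z - x) (m - phi a z + phi a x) (fun y => andb (q x y) true));
          auto; [lia|].
        intros y Hqy. rewrite Bool.andb_true_r in Hqy.
        destruct (Hq x y Hqy) as (D & Bx & By & V).
        split; [lia|]. split; [lia|].
        eapply Rabs_le_eq; [|exact V]. unfold gap.
        rewrite (phi_congr a (y + (z - x)) (z - x + y)) by lia. ring.
      * pose proof (line_bound_le_cut a C0 Ny (z - x) Ha HC0 HNy). simpl indb. fold A Y in H0. lra.
    + rewrite (sumL_ext _ _ (fun _ => 0)) by (intros; rewrite Bool.andb_false_r; reflexivity).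
      rewrite sumL_const. simpl indb.
      assert (0 <= A * 3 * Y * invZ_cut Ny (z - x)) by (apply Rmult_le_pos; nra). lra.
  - rewrite sumL_plus, !sumL_scal.
    pose proof (invZ_cut_sum N2 Ny z HNy ltac:(lia)).
    pose proof (near_diag_count N2 z W HW).
    assert (0 <= A * 3 * Y) by nra.
    apply Rplus_le_compat; apply Rmult_le_compat_l; auto; lra.
Qed.

(* steep points of one row: they are pairwise close *)
Lemma steep_row_count (y : Z) (st : Z -> bool) :
  (forall x, st x = true -> cvx a / 2 <= drow a (z + y) x) \/
  (forall x, st x = true -> drow a (z + y) x <= - (cvx a / 2)) ->
  sumL (zrange N2) (fun x => indb (q x y && st x)) <= band_ratio a C0 + 1.
Proof.
  intros Hs. pose proof (cvx_pos a Ha).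
  replace (band_ratio a C0 + 1) with (2 * (2 * C0 / (cvx a / 2)) + 1)
    by (unfold band_ratio; field; lra).
  rewrite <- length_filter_sum. apply diam_count.
  - apply NoDup_filter, NoDup_zrange.
  - apply Rmult_le_pos; [lra|left; apply Rinv_0_lt_compat; lra].
  - intros x x' Hx Hx'. apply filter_In in Hx. apply filter_In in Hx'.
    destruct Hx as [_ Hx]. destruct Hx' as [_ Hx'].
    apply andb_prop in Hx. apply andb_prop in Hx'.
    destruct Hx as [Qx Sx]. destruct Hx' as [Qx' Sx'].
    destruct (Hq x y Qx) as (_ & _ & _ & Vx). destruct (Hq x' y Qx') as (_ & _ & _ & Vx').
    apply (steep_band_close (row a (z + y)) (row_incr a (z + y) Ha) (cvx a / 2)
      (phi a z + phi a y - m)); try apply resonant_row; auto; [lra|].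
    rewrite !row_step. destruct Hs as [Hs|Hs]; [left|right]; split; auto.
Qed.

Lemma steep_part (st : Z -> Z -> bool) :
  (forall y, (forall x, st y x = true -> cvx a / 2 <= drow a (z + y) x) \/
             (forall x, st y x = true -> drow a (z + y) x <= - (cvx a / 2))) ->
  sumL (zrange N2) (fun x => sumL (zrange Ny) (fun y => indb (q x y && st y x))) <=
  (band_ratio a C0 + 1) * (2 * IZR Ny + 1).
Proof.
  intros Hs. rewrite sumL_swap, <- length_zrange, <- sumL_const by lia.
  apply sumL_le; intros y _. apply steep_row_count, Hs.
Qed.

Lemma row_count :
  sumL (zrange N2) (fun x => sumL (zrange Ny) (fun y => indb (q x y))) <= C_row a C0 * bnd a N2 Ny.
Proof.
  set (A := band_ratio a C0). assert (HA : 0 <= A) by (apply band_ratio_nonneg; auto).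
  set (T := flat_width a N2). assert (HT : 0 <= T) by (left; apply Rpower_pos).
  assert (HNyr : 1 <= IZR Ny) by (apply IZR_le; lia).
  eapply Rle_trans.
  { apply sumL_le; intros x _; apply sumL_le; intros y _. apply (resonant_split x y). }
  rewrite (sumL_ext _ _ (fun x => sumL (zrange Ny) (fun y => indb (q x y && near_diag z (IZR Ny + T) x))
    + (sumL (zrange Ny) (fun y => indb (q x y && steep_up a (z + y) x))
    + sumL (zrange Ny) (fun y => indb (q x y && steep_down a (z + y) x)))))
    by (intros; rewrite <- !sumL_plus; reflexivity).
  rewrite !sumL_plus.
  pose proof (near_diag_part (IZR Ny + T) ltac:(lra)) as PU.
  pose proof (steep_part (fun y x => steep_up a (z + y) x)) as PR.
  pose proof (steep_part (fun y x => steep_down a (z + y) x)) as PL.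
  eapply Rle_trans.
  { apply Rplus_le_compat; [apply PU|apply Rplus_le_compat; [apply PR|apply PL]].
    - intros y. left. intros x Hx. unfold steep_up in Hx. destruct (Rle_dec _ _); [auto|discriminate].
    - intros y. right. intros x Hx. unfold steep_down in Hx. destruct (Rle_dec _ _); [auto|discriminate]. }
  fold A T. unfold C_row. fold A. apply row_arith; auto.
Qed.

End RowArgument.

Lemma bnd_nonneg (a : R) (L M : Z) : (1 <= L)%Z -> (1 <= M)%Z -> 0 <= bnd a L M.
Proof.
  intros HL HM. unfold bnd. pose proof (ln_2plus_ge1 M HM).
  assert (1 <= IZR M) by (apply IZR_le; lia). pose proof (Rpower_pos (IZR L) (2 - a)). nra.
Qed.

(* For A <= B, B^(2-a) log(2 + A) <~ B: the bound of shape (B, A) is dominated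
   by the one of shape (A, B). *)
Lemma bnd_swap (a : R) (A B : Z) : 1 < a < 2 -> (1 <= A)%Z -> (A <= B)%Z ->
  bnd a B A <= (3 / (a - 1) + 1) * bnd a A B.
Proof.
  intros Ha HA Hle.
  assert (HAr : 1 <= IZR A) by (apply IZR_le; lia).
  assert (HBr : IZR A <= IZR B) by (apply IZR_le; lia).
  set (y := IZR B) in *. set (g := a - 1). assert (Hg : 0 < g) by (unfold g; lra).
  (* log(2 + A) <= log(3 y) <= (3 / g) y^g *)
  assert (Hlog : ln (2 + IZR A) <= 3 / g * Rpower y g).
  { pose proof (ln_le_Rpower (3 * y) g ltac:(lra) Hg) as Hp.
    rewrite <- Rpower_mult_distr in Hp by lra.
    assert (Rpower 3 g <= 3) by (apply Rpower_le_self; unfold g; lra).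
    pose proof (Rpower_pos y g).
    assert (ln (2 + IZR A) <= ln (3 * y)) by (apply ln_le_mono; lra).
    apply (Rmult_le_reg_l g); auto.
    replace (g * (3 / g * Rpower y g)) with (3 * Rpower y g) by (field; lra). nra. }
  assert (Hprod : Rpower y (2 - a) * Rpower y g = y).
  { rewrite <- Rpower_plus. replace (2 - a + g) with 1 by (unfold g; ring). apply Rpower_1. lra. }
  assert (HB : Rpower y (2 - a) * ln (2 + IZR A) <= 3 / g * y).
  { pose proof (Rpower_pos y (2 - a)).
    apply Rle_trans with (Rpower y (2 - a) * (3 / g * Rpower y g)); [apply Rmult_le_compat_l; lra|].
    right. transitivity (3 / g * (Rpower y (2 - a) * Rpower y g)); [ring|rewrite Hprod; reflexivity]. }
  pose proof (bnd_nonneg a A B HA ltac:(lia)).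
  assert (0 < 3 / g) by (apply Rmult_lt_0_compat; [lra|apply Rinv_0_lt_compat; auto]).
  assert (y <= bnd a A B).
  { unfold bnd. fold y. pose proof (ln_2plus_ge1 B ltac:(lia)). pose proof (Rpower_pos (IZR A) (2 - a)).
    fold y in H1. nra. }
  unfold bnd at 1. fold y g.
  assert (3 / g * y <= 3 / g * bnd a A B) by (apply Rmult_le_compat_l; lra).
  lra.
Qed.

Definition C_all (a C0 : R) : R := C_row a C0 + C_line a C0 * (3 / (a - 1) + 1).

Lemma le_mul_weaken (X c C b : R) : c <= C -> 0 <= b -> X <= c * b -> X <= C * b.
Proof. intros Hc Hb HX. eapply Rle_trans; [apply HX|]. apply Rmult_le_compat_r; auto. Qed.

Lemma le_mul_Rmin (X C u v : R) : X <= C * u -> X <= C * v -> X <= C * Rmin u v.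
Proof. intros Hu Hv. apply Rmin_case; auto. Qed.

Section Fibres.

Variables (a C0 m : R) (N N1 N2 N3 : Z).
Hypotheses (Ha : 1 < a < 2) (HC0 : 0 <= C0).
Hypotheses (HN1 : (1 <= N1)%Z) (HN2 : (1 <= N2)%Z) (HN3 : (1 <= N3)%Z).

Let HA : 0 <= band_ratio a C0. Proof. apply band_ratio_nonneg; auto. Qed.
Let Hswap : 1 <= 3 / (a - 1) + 1.
Proof. assert (0 < 3 / (a - 1)) by (apply Rmult_lt_0_compat; [lra|apply Rinv_0_lt_compat; lra]). lra. Qed.
Let Hline : C_line a C0 <= C_all a C0.
Proof. unfold C_all, C_row, C_line in *. nra. Qed.
Let Hline_swap : C_line a C0 * (3 / (a - 1) + 1) <= C_all a C0.
Proof. unfold C_all, C_row. lra. Qed.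
Let Hrow : C_row a C0 <= C_all a C0.
Proof. unfold C_all, C_row, C_line in *. nra. Qed.

(* |S_k1| <~ N2^(2-a) log(2+N3) + N3: by rows if N3 <= N2, else by symmetry *)
Lemma card_Sk1_rows (k1 : Z) :
  INR (card_Sk1 a C0 m N N1 N2 N3 k1) <= C_all a C0 * bnd a N2 N3.
Proof.
  destruct (Z_le_gt_dec N3 N2) as [h|h].
  - apply le_mul_weaken with (c := C_row a C0); [auto|apply bnd_nonneg; auto|].
    eapply Rle_trans; [apply card_Sk1_double|].
    apply (row_count a C0 m k1 N2 N3 (fun k2 k3 => inS a C0 m N N1 N2 N3 (k1 - k2 + k3) k1 k2 k3));
      auto.
    intros k2 k3 Hq. apply inS_spec in Hq. destruct Hq as (E & D1 & D2 & V & B). repeat split; tauto.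
  - apply le_mul_weaken with (c := C_line a C0 * (3 / (a - 1) + 1)); [auto|apply bnd_nonneg; auto|].
    eapply Rle_trans; [apply card_Sk1_lines; auto|].
    rewrite Rmult_assoc. apply Rmult_le_compat_l; [unfold C_line; lra|]. apply bnd_swap; auto; lia.
Qed.

(* |S_k3| <~ N2^(2-a) log(2+N1) + N1: by rows if N1 <= N2, else by symmetry *)
Lemma card_Sk3_rows (k3 : Z) :
  INR (card_Sk3 a C0 m N N1 N2 N3 k3) <= C_all a C0 * bnd a N2 N1.
Proof.
  destruct (Z_le_gt_dec N1 N2) as [h|h].
  - apply le_mul_weaken with (c := C_row a C0); [auto|apply bnd_nonneg; auto|].
    eapply Rle_trans; [apply card_Sk3_double|]. rewrite sumL_swap.
    apply (row_count a C0 m k3 N2 N1 (fun k2 k1 => inS a C0 m N N1 N2 N3 (k1 - k2 + k3) k1 k2 k3));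
      auto.
    intros k2 k1 Hq. apply inS_spec in Hq. destruct Hq as (E & D1 & D2 & V & B).
    repeat split; try tauto. eapply Rabs_le_eq; [|exact V].
    rewrite (phi_congr a (k3 - k2 + k1) (k1 - k2 + k3)) by lia. ring.
  - apply le_mul_weaken with (c := C_line a C0 * (3 / (a - 1) + 1)); [auto|apply bnd_nonneg; auto|].
    eapply Rle_trans; [apply card_Sk3_lines; auto|].
    rewrite Rmult_assoc. apply Rmult_le_compat_l; [unfold C_line; lra|]. apply bnd_swap; auto; lia.
Qed.

Lemma card_Sk_bound (k : Z) : INR (card_Sk a C0 m N N1 N2 N3 k) <=
  C_all a C0 * Rmin (bnd a (Z.min N2 N3) N1) (bnd a (Z.min N1 N2) N3).
Proof.
  apply le_mul_Rmin; (apply le_mul_weaken with (c := C_line a C0); [auto|apply bnd_nonneg; lia|]).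
  - apply card_Sk_lines_k1; auto.
  - apply card_Sk_lines_k3; auto.
Qed.

Lemma card_Sk1_bound (k1 : Z) : INR (card_Sk1 a C0 m N N1 N2 N3 k1) <=
  C_all a C0 * Rmin (bnd a N3 N2) (bnd a N2 N3).
Proof.
  apply le_mul_Rmin; [|apply card_Sk1_rows].
  apply le_mul_weaken with (c := C_line a C0); [auto|apply bnd_nonneg; lia|].
  apply card_Sk1_lines; auto.
Qed.

Lemma card_Sk2_bound (k2 : Z) : INR (card_Sk2 a C0 m N N1 N2 N3 k2) <=
  C_all a C0 * Rmin (bnd a N3 N1) (bnd a N1 N3).
Proof.
  apply le_mul_Rmin; (apply le_mul_weaken with (c := C_line a C0); [auto|apply bnd_nonneg; lia|]).
  - apply card_Sk2_lines_k1; auto.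
  - apply card_Sk2_lines_k3; auto.
Qed.

Lemma card_Sk3_bound (k3 : Z) : INR (card_Sk3 a C0 m N N1 N2 N3 k3) <=
  C_all a C0 * Rmin (bnd a N1 N2) (bnd a N2 N1).
Proof.
  apply le_mul_Rmin; [|apply card_Sk3_rows].
  apply le_mul_weaken with (c := C_line a C0); [auto|apply bnd_nonneg; lia|].
  apply card_Sk3_lines; auto.
Qed.

End Fibres.

Lemma dyad_ge1 (n : nat) : (1 <= dyad n)%Z.
Proof. unfold dyad. pose proof (Z.pow_pos_nonneg 2 (Z.of_nat n) ltac:(lia) ltac:(lia)). lia. Qed.

Lemma C_all_pos (a C0 : R) : 1 < a < 2 -> 0 <= C0 -> 0 < C_all a C0.
Proof.
  intros Ha HC. pose proof (band_ratio_nonneg a C0 Ha HC).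
  assert (0 < 3 / (a - 1)) by (apply Rmult_lt_0_compat; [lra|apply Rinv_0_lt_compat; lra]).
  unfold C_all, C_row, C_line. nra.
Qed.

Theorem corollary2p6 (alpha C0 : R) :
  1 < alpha < 2 -> 0 < C0 ->
  exists C : R, 0 < C /\
  forall (n n1 n2 n3 : nat) (m : R),
    let N := dyad n in let N1 := dyad n1 in let N2 := dyad n2 in
    let N3 := dyad n3 in
    (N1 <= N)%Z -> (N2 <= N)%Z -> (N3 <= N)%Z ->
    (forall k : Z, INR (card_Sk alpha C0 m N N1 N2 N3 k) <=
       C * Rmin (bnd alpha (Z.min N2 N3) N1) (bnd alpha (Z.min N1 N2) N3)) /\
    (forall k1 : Z, INR (card_Sk1 alpha C0 m N N1 N2 N3 k1) <=
       C * Rmin (bnd alpha N3 N2) (bnd alpha N2 N3)) /\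
    (forall k2 : Z, INR (card_Sk2 alpha C0 m N N1 N2 N3 k2) <=
       C * Rmin (bnd alpha N3 N1) (bnd alpha N1 N3)) /\
    (forall k3 : Z, INR (card_Sk3 alpha C0 m N N1 N2 N3 k3) <=
       C * Rmin (bnd alpha N1 N2) (bnd alpha N2 N1)).
Proof.
  intros Ha HC0. exists (C_all alpha C0). split; [apply C_all_pos; lra|].
  intros n n1 n2 n3 m N N1 N2 N3 _ _ _.
  pose proof (dyad_ge1 n1) as H1. pose proof (dyad_ge1 n2) as H2. pose proof (dyad_ge1 n3) as H3.
  assert (HC : 0 <= C0) by lra.
  repeat split.
  - apply card_Sk_bound; auto.
  - apply card_Sk1_bound; auto.
  - apply card_Sk2_bound; auto.
  - apply card_Sk3_bound; auto.
Qed.
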